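(* Let $\theta>1$, $p>1$, $\varepsilon>0$, let $F(u)=\frac{1}{2\theta}|1-u^2|^{\theta}$ and, for $\beta\in\mathbb{R}$, let $G_\beta(u):=F(u)-\beta u$. Set $u_\pm:=\pm(2\theta-1)^{-1/2}$, so that $F'(u_\pm)=\mp(2\theta-1)^{1/2-\theta}(2\theta-2)^{\theta-1}$. Consider the ODE on the whole real line $$\varepsilon^p\big(|u_x|^{p-2}u_x\big)_x-G_\beta'(u)=0,\qquad x\in\mathbb{R}.$$ (i) Let $\beta\in(0,F'(u_-))$ and set $z_\beta^-:=\min\{z\in\mathbb{R}: G_\beta'(z)=0\}$. If $2<p\le\theta$, then there exists a solution $\psi_\beta$ of the ODE with $\psi_\beta(0)=\max_{\mathbb{R}}\psi_\beta=:z_\beta^+$, with $G_\beta(z_\beta^+)=G_\beta(z_\beta^-)$, and there exists $\omega_\beta>0$ such that $\psi_\beta(x)=z_\beta^-$ for all $x\in(-\infty,-\omega_\beta]\cup[\omega_\beta,+\infty)$, $\psi_\beta'>0$ in $(-\omega_\beta,0)$ and $\psi_\beta'<0$ in $(0,\omega_\beta)$. Moreover $\lim_{\beta\to0^+}z_\beta^\pm=\pm1$. (ii) Let $\beta\in(F'(u_+),0)$ and set $z_\beta^+:=\max\{z\in\mathbb{R}: G_\beta'(z)=0\}$. If $2<p\le\theta$, then there exists a solution $\psi_\beta$ of the ODE with $\psi_\beta(0)=\min_{\mathbb{R}}\psi_\beta=:z_\beta^-$, with $G_\beta(z_\beta^-)=G_\beta(z_\beta^+)$, and there exists $\omega_\beta>0$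 such that $\psi_\beta(x)=z_\beta^+$ for all $x\in(-\infty,-\omega_\beta]\cup[\omega_\beta,+\infty)$, $\psi_\beta'<0$ in $(-\omega_\beta,0)$ and $\psi_\beta'>0$ in $(0,\omega_\beta)$.
   Context: For $\beta\in(F'(u_+),F'(u_-))$ the function $G_\beta$ has exactly three critical points. The solutions $\psi_\beta$ are called pulse (homoclinic) solutions. *)

From Stdlib Require Import Reals.
From Coquelicot Require Import Coquelicot.
Open Scope R_scope.

(* Real power x^a for x >= 0, with the convention 0^a = 0 (a > 0). *)
Definition rpow (x a : R) : R :=
  if Rlt_dec 0 x then Rpower x a else 0.

Definition F (th u : R) : R := / (2 * th) * rpow (Rabs (1 - u ^ 2)) th.

Definition G (th beta u : R) : R := F th u - beta * u.

Definition u_plus (th : R) : R := Rpower (2 * th - 1) (- / 2).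
Definition u_minus (th : R) : R := - Rpower (2 * th - 1) (- / 2).

Definition phi_p (p s : R) : R := rpow (Rabs s) (p - 2) * s.

Definition is_solution (th p eps beta : R) (psi : R -> R) : Prop :=
  (forall x, ex_derive psi x) /\
  (forall x, ex_derive (fun y => phi_p p (Derive psi y)) x /\
     Rpower eps p * Derive (fun y => phi_p p (Derive psi y)) x
       - Derive (G th beta) (psi x) = 0).

Definition is_min_crit (th beta z : R) : Prop :=
  Derive (G th beta) z = 0 /\
  forall w, Derive (G th beta) w = 0 -> z <= w.

Definition is_max_crit (th beta z : R) : Prop :=
  Derive (G th beta) z = 0 /\
  forall w, Derive (G th beta) w = 0 -> w <= z.

Definition pulse_up (th p eps beta zm : R) (psi : R -> R) : Prop :=
  is_solution th p eps beta psi /\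
  (forall x, psi x <= psi 0) /\
  G th beta (psi 0) = G th beta zm /\
  exists om : R, 0 < om /\
    (forall x, (x <= - om \/ om <= x) -> psi x = zm) /\
    (forall x, - om < x < 0 -> 0 < Derive psi x) /\
    (forall x, 0 < x < om -> Derive psi x < 0).

Definition pulse_down (th p eps beta zp : R) (psi : R -> R) : Prop :=
  is_solution th p eps beta psi /\
  (forall x, psi 0 <= psi x) /\
  G th beta (psi 0) = G th beta zp /\
  exists om : R, 0 < om /\
    (forall x, (x <= - om \/ om <= x) -> psi x = zp) /\
    (forall x, - om < x < 0 -> Derive psi x < 0) /\
    (forall x, 0 < x < om -> 0 < Derive psi x).

(* Multiplying the equation by psi' gives the first integral
     eps^p (p-1)/p |psi'|^p = G_beta(psi) - G_beta(z^-),
   so on its rising half a pulse is the inverse of the travel time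
     T(u) = int du / ((G_beta(u) - G_beta(z^-)) / k)^(1/p),   k = eps^p (p-1)/p,
   taken over (z^-, z^+), where z^+ is the first point right of z^- at which G_beta
   returns to the level G_beta(z^-).  T stays bounded at both ends: near z^- the gap
   grows quadratically (G_beta'' > 0 there) and (u - z^-)^(-2/p) is integrable since
   p > 2; near z^+ it grows linearly since G_beta'(z^+) < 0.  Extending the inverse of T
   by the constant z^- and reflecting it evenly about its maximum z^+ gives the compactly
   supported pulse; psi and the flux |psi'|^(p-2) psi' stay differentiable across the
   junctions because the speed vanishes there.  Part (ii) is part (i) under u -> -u,
   beta -> -beta.  As beta -> 0+, F'(z^-) = beta forces z^- -> -1, and then
   F(z^+) = F(z^-) + beta (z^+ - z^-) forces z^+ -> 1.  The hypothesis p <= theta enters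
   only through theta > 2. *)

From Stdlib Require Import Reals Ranalysis5 Lra Classical ClassicalEpsilon.
From Coquelicot Require Import Coquelicot.
Open Scope R_scope.

Lemma is_derive_continuity_pt (f : R -> R) x l :
  is_derive f x l -> continuity_pt f x.
Proof.
  intros H. apply continuity_pt_filterlim, (ex_derive_continuous f x).
  exists l; exact H.
Qed.

Lemma continuity_pt_ball (f : R -> R) x :
  continuity_pt f x -> forall eps, 0 < eps ->
  exists eta, 0 < eta /\ forall y, Rabs (y - x) < eta -> Rabs (f y - f x) < eps.
Proof.
  intros H eps Heps. destruct (H eps Heps) as [eta [Heta Hq]].
  exists eta. split; [exact Heta|]. intros y Hy.
  destruct (Req_dec y x) as [->|Hne].
  - rewrite Rminus_diag, Rabs_R0; exact Heps.
  - apply (Hq y). split; [split; [exact I|auto]| exact Hy].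
Qed.

Lemma locally_of_Rabs_lt (x : R) (P : R -> Prop) (d : R) :
  0 < d -> (forall y, Rabs (y - x) < d -> P y) -> locally x P.
Proof. intros Hd H. exists (mkposreal d Hd). intros y Hy. apply H, Hy. Qed.

Lemma MVT_interior (h dh : R -> R) (a b : R) : a < b ->
  (forall x, a < x < b -> is_derive h x (dh x)) ->
  (forall x, a <= x <= b -> continuity_pt h x) ->
  exists c, a < c < b /\ h b - h a = dh c * (b - a).
Proof.
  intros Hab Hd Hc.
  (* [MVT_gen] may return an endpoint; a slope there that is off by one rules this out *)
  set (V := (h b - h a) / (b - a) + 1).
  set (df := fun x => if Rlt_dec a x then if Rlt_dec x b then dh x else V else V).
  destruct (MVT_gen h a b df) as [c [Hc1 Hc2]]; rewrite ?Rmin_left, ?Rmax_right in * by lra.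
  - intros x Hx. unfold df.
    destruct (Rlt_dec a x); [|lra]. destruct (Rlt_dec x b); [|lra]. auto.
  - exact Hc.
  - unfold df in Hc2. destruct (Rlt_dec a c) as [Hac|]; [destruct (Rlt_dec c b)|].
    + exists c. split; [lra| exact Hc2].
    + exfalso. unfold V in Hc2. field_simplify in Hc2; lra.
    + exfalso. unfold V in Hc2. field_simplify in Hc2; lra.
Qed.

Lemma le_of_derive_nonneg (h dh : R -> R) (a b : R) : a <= b ->
  (forall x, a < x < b -> is_derive h x (dh x)) ->
  (forall x, a <= x <= b -> continuity_pt h x) ->
  (forall x, a < x < b -> 0 <= dh x) -> h a <= h b.
Proof.
  intros Hab Hd Hc Hpos.
  destruct (Req_dec a b) as [->|Hne]; [lra|].
  destruct (MVT_interior h dh a b) as [c [Hc' Heq]]; auto; [lra|].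
  assert (0 <= dh c * (b - a)) by (apply Rmult_le_pos; [apply Hpos, Hc'| lra]).
  lra.
Qed.

Lemma lt_of_derive_pos (h dh : R -> R) (a b : R) : a < b ->
  (forall x, a < x < b -> is_derive h x (dh x)) ->
  (forall x, a <= x <= b -> continuity_pt h x) ->
  (forall x, a < x < b -> 0 < dh x) -> h a < h b.
Proof.
  intros Hab Hd Hc Hpos.
  destruct (MVT_interior h dh a b) as [c [Hc' Heq]]; auto.
  assert (0 < dh c * (b - a)) by (apply Rmult_lt_0_compat; [apply Hpos, Hc'| lra]).
  lra.
Qed.

Lemma incr_of_derive_pos (T f : R -> R) (a b : R) :
  (forall x, a < x < b -> is_derive T x (f x)) -> (forall x, a < x < b -> 0 < f x) ->
  forall u v, a < u -> u < v -> v < b -> T u < T v.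
Proof.
  intros HT Hf u v Hu Huv Hv. apply (lt_of_derive_pos T f); [exact Huv| | |].
  - intros x Hx. apply HT. lra.
  - intros x Hx. apply (is_derive_continuity_pt T x (f x)), HT. lra.
  - intros x Hx. apply Hf. lra.
Qed.

Lemma sub_le_of_derive_le (T f K dK : R -> R) (s r : R) : s <= r ->
  (forall x, s <= x <= r -> is_derive T x (f x)) ->
  (forall x, s <= x <= r -> is_derive K x (dK x)) ->
  (forall x, s < x < r -> f x <= dK x) ->
  T r - T s <= K r - K s.
Proof.
  intros Hsr HT HK Hle.
  assert (Hd : forall x, s <= x <= r -> is_derive (fun x => K x - T x) x (dK x - f x))
    by (intros x Hx; apply (is_derive_minus K T); [apply HK| apply HT]; lra).
  enough (K s - T s <= K r - T r) by lra.
  apply (le_of_derive_nonneg (fun x => K x - T x) (fun x => dK x - f x)); auto.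
  - intros x Hx. apply Hd. lra.
  - intros x Hx. apply (is_derive_continuity_pt _ _ _ (Hd x Hx)).
  - intros x Hx. specialize (Hle x Hx). lra.
Qed.

Lemma is_derive_of_continuous_derivative (f d : R -> R) (a del : R) : 0 < del ->
  continuity_pt f a -> continuity_pt d a ->
  (forall y, y <> a -> Rabs (y - a) < del -> is_derive f y (d y)) ->
  is_derive f a (d a).
Proof.
  intros Hdel Hfc Hdc Hd. apply is_derive_Reals. intros eps Heps.
  destruct (continuity_pt_ball d a Hdc eps Heps) as [eta [Heta Hdn]].
  assert (Hm : 0 < Rmin del eta) by (apply Rmin_pos; lra).
  exists (mkposreal _ Hm). intros h Hh0 Hh. simpl in Hh.
  pose proof (Rmin_l del eta). pose proof (Rmin_r del eta).
  assert (Hseg : forall y, Rmin a (a + h) <= y <= Rmax a (a + h) -> Rabs (y - a) <= Rabs h)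
    by (intros y; unfold Rmin, Rmax; destruct Rle_dec; split_Rabs; lra).
  destruct (MVT_gen f a (a + h) d) as [c [Hc Heq]].
  - intros y Hy. apply Hd.
    + unfold Rmin, Rmax in Hy; destruct Rle_dec; lra.
    + specialize (Hseg y ltac:(lra)). lra.
  - intros y Hy. destruct (Req_dec y a) as [->|Hya]; [exact Hfc|].
    apply (is_derive_continuity_pt f y (d y)), Hd; [exact Hya|].
    specialize (Hseg y Hy). lra.
  - replace ((f (a + h) - f a) / h - d a) with (d c - d a)
      by (rewrite Heq; field; exact Hh0).
    apply Hdn. specialize (Hseg c Hc). lra.
Qed.

Lemma is_derive_Rpower_comp (u : R -> R) x du a : 0 < u x -> is_derive u x du ->
  is_derive (fun y => Rpower (u y) a) x (a * Rpower (u x) (a - 1) * du).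
Proof.
  intros Hpos Hd.
  assert (H : is_derive (fun z => Rpower z a) (u x) (a * Rpower (u x) (a - 1)))
    by (apply is_derive_Reals, derivable_pt_lim_power, Hpos).
  rewrite Rmult_comm. exact (is_derive_comp (fun z => Rpower z a) u x _ _ H Hd).
Qed.

(* The difference quotient of [chi] at [t] is the reciprocal of that of [T] at [chi t],
   taken with the increment [chi (t + h) - chi t], which is nonzero and small. *)
Lemma is_derive_inverse (T chi : R -> R) (t l del : R) : 0 < del ->
  continuity_pt chi t -> is_derive T (chi t) l -> l <> 0 ->
  (forall y, Rabs (y - t) < del -> T (chi y) = y) ->
  is_derive chi t (/ l).
Proof.
  intros Hdel Hc HT Hl Hinv. apply is_derive_Reals in HT. apply is_derive_Reals.
  intros eps Heps.
  assert (Hal : 0 < Rabs l) by (apply Rabs_pos_lt, Hl).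
  set (e1 := Rmin (Rabs l / 2) (eps * Rabs l * Rabs l / 2)).
  assert (He1 : 0 < e1) by (apply Rmin_pos; [lra| repeat apply Rmult_lt_0_compat; lra]).
  destruct (HT e1 He1) as [d1 Hd1].
  destruct (continuity_pt_ball chi t Hc d1 (cond_pos d1)) as [d2 [Hd2 Hchi]].
  assert (Hm : 0 < Rmin del d2) by (apply Rmin_pos; lra).
  exists (mkposreal _ Hm). intros h Hh0 Hh. simpl in Hh.
  pose proof (Rmin_l del d2). pose proof (Rmin_r del d2).
  set (k := chi (t + h) - chi t).
  assert (HTk : T (chi t + k) - T (chi t) = h).
  { unfold k. replace (chi t + (chi (t + h) - chi t)) with (chi (t + h)) by ring.
    rewrite (Hinv t) by (rewrite Rminus_diag, Rabs_R0; lra).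
    rewrite (Hinv (t + h)) by (replace (t + h - t) with h by ring; lra). ring. }
  assert (Hk0 : k <> 0) by (intros Hk; rewrite Hk, Rplus_0_r in HTk; lra).
  assert (Hq : Rabs (h / k - l) < e1).
  { rewrite <- HTk. apply Hd1; [exact Hk0|]. apply Hchi. replace (t + h - t) with h by ring. lra. }
  assert (He1l : e1 <= Rabs l / 2) by apply Rmin_l.
  assert (He1e : e1 <= eps * Rabs l * Rabs l / 2) by apply Rmin_r.
  rewrite Rabs_minus_sym in Hq.
  assert (Hql : Rabs l / 2 < Rabs (h / k)).
  { pose proof (Rabs_triang_inv l (l - h / k)) as Htri.
    replace (l - (l - h / k)) with (h / k) in Htri by ring. lra. }
  assert (Hhk : h / k <> 0) by (intros E; rewrite E, Rabs_R0 in Hql; lra).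
  replace (k / h - / l) with ((l - h / k) / (h / k * l)) by (field; auto).
  assert (Hden : 0 < Rabs (h / k) * Rabs l) by (apply Rmult_lt_0_compat; lra).
  rewrite Rabs_div, Rabs_mult by (apply Rmult_integral_contrapositive; auto).
  apply (Rmult_lt_reg_r (Rabs (h / k) * Rabs l)); [exact Hden|].
  unfold Rdiv. rewrite Rmult_assoc, Rinv_l, Rmult_1_r by lra.
  assert (eps * (Rabs l * Rabs l / 2) <= eps * (Rabs (h / k) * Rabs l))
    by (apply Rmult_le_compat_l; nra).
  nra.
Qed.

Lemma Rpower_gt_0 x a : 0 < Rpower x a.
Proof. apply exp_pos. Qed.

Lemma rpow_Rpower x a : 0 < x -> rpow x a = Rpower x a.
Proof. intros H. unfold rpow. destruct (Rlt_dec 0 x); [reflexivity| lra]. Qed.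

Lemma rpow_nonpos x a : x <= 0 -> rpow x a = 0.
Proof. intros H. unfold rpow. destruct (Rlt_dec 0 x); [lra| reflexivity]. Qed.

Lemma rpow_ge_0 x a : 0 <= rpow x a.
Proof. unfold rpow. destruct (Rlt_dec 0 x); [left; apply Rpower_gt_0| lra]. Qed.

Lemma rpow_lt x a eps : 0 < a -> 0 < eps -> Rabs x < Rpower eps (/ a) -> rpow x a < eps.
Proof.
  intros Ha Heps Hx. destruct (Rlt_dec 0 x) as [Hpos|Hnpos].
  - rewrite rpow_Rpower, <- (Rpower_1 eps), <- (Rinv_l a), <- Rpower_mult by lra.
    apply Rlt_Rpower_l; [exact Ha|]. rewrite Rabs_right in Hx; lra.
  - rewrite rpow_nonpos; lra.
Qed.

Lemma rpow_continuous a x : 0 < a -> continuity_pt (fun y => rpow y a) x.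
Proof.
  intros Ha. destruct (Rtotal_order x 0) as [Hx|[->|Hx]].
  - apply continuity_pt_ext_loc with (fun _ => 0); [|apply continuity_pt_const; now intros ? ?].
    apply (locally_of_Rabs_lt _ _ (- x)); [lra|]. intros y Hy.
    rewrite rpow_nonpos; [reflexivity|]. split_Rabs; lra.
  - intros eps Heps. exists (Rpower eps (/ a)). split; [apply Rpower_gt_0|].
    intros y [_ Hy]. simpl in *. unfold R_dist in *. rewrite Rminus_0_r in Hy.
    rewrite (rpow_nonpos 0), Rminus_0_r, Rabs_right by (try apply Rle_ge, rpow_ge_0; lra).
    apply rpow_lt; assumption.
  - apply continuity_pt_ext_loc with (fun y => Rpower y a).
    + apply (locally_of_Rabs_lt _ _ x); [lra|]. intros y Hy.
      rewrite rpow_Rpower; [reflexivity|]. split_Rabs; lra.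
    + apply derivable_continuous_pt. exists (a * Rpower x (a - 1)).
      apply derivable_pt_lim_power, Hx.
Qed.

Lemma is_derive_rpow_abs th w : 2 < th ->
  is_derive (fun y => rpow (Rabs y) th) w (th * w * rpow (Rabs w) (th - 2)).
Proof.
  intros Hth.
  assert (Hoff : forall w, w <> 0 ->
            is_derive (fun y => rpow (Rabs y) th) w (th * w * rpow (Rabs w) (th - 2))).
  { clear w. intros w Hw. pose proof (Rabs_pos_lt w Hw) as Haw.
    apply is_derive_ext_loc with (fun y => Rpower (Rabs y) th).
    - apply (locally_of_Rabs_lt _ _ (Rabs w)); [exact Haw|]. intros y Hy.
      rewrite rpow_Rpower; [reflexivity|]. split_Rabs; lra.
    - replace (th * w * rpow (Rabs w) (th - 2))
        with (th * Rpower (Rabs w) (th - 1) * (sign w * 1)).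
      + apply (is_derive_Rpower_comp Rabs); [exact Haw|].
        apply (is_derive_Rabs (fun y => y)); [apply is_derive_Reals, derivable_pt_lim_id| exact Hw].
      + rewrite rpow_Rpower by exact Haw.
        replace (th - 1) with (1 + (th - 2)) by ring.
        rewrite Rpower_plus, Rpower_1 by exact Haw.
        destruct (Rlt_dec 0 w).
        * rewrite sign_eq_1, Rabs_right by lra. ring.
        * rewrite sign_eq_m1, Rabs_left by lra. ring. }
  destruct (Req_dec w 0) as [->|Hw]; [|exact (Hoff w Hw)].
  apply (is_derive_of_continuous_derivative _ (fun w => th * w * rpow (Rabs w) (th - 2)) 0 1).
  - lra.
  - apply continuity_pt_comp with (f2 := fun z => rpow z th).
    + apply continuity_pt_filterlim, continuous_Rabs.
    + apply rpow_continuous. lra.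
  - apply continuity_pt_mult; [apply continuity_pt_scal, continuity_pt_id|].
    apply continuity_pt_comp with (f2 := fun z => rpow z (th - 2)).
    + apply continuity_pt_filterlim, continuous_Rabs.
    + apply rpow_continuous. lra.
  - intros y Hy _. exact (Hoff y Hy).
Qed.

Lemma increasing_sup (T : R -> R) (a b U : R) : a < b ->
  (forall u v, a < u -> u < v -> v < b -> T u < T v) ->
  (forall u, a < u < b -> T u <= U) ->
  exists B, (forall u, a < u < b -> T u < B) /\
            (forall t, t < B -> exists u, a < u < b /\ t < T u).
Proof.
  intros Hab Hincr HU.
  destruct (completeness (fun y => exists u, a < u < b /\ y = T u)) as [B [Hub Hlub]].
  - exists U. intros y [u [Hu ->]]. apply HU, Hu.
  - exists (T ((a + b) / 2)), ((a + b) / 2). split; [lra| reflexivity].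
  - exists B. split.
    + intros u Hu. apply Rlt_le_trans with (T ((u + b) / 2)); [apply Hincr; lra|].
      apply Hub. exists ((u + b) / 2). split; [lra| reflexivity].
    + intros t Ht. apply NNPP. intros Hno.
      enough (B <= t) by lra. apply Hlub. intros y [u [Hu ->]].
      apply Rnot_lt_le. intros Htu. apply Hno. exists u. split; assumption.
Qed.

Lemma increasing_inf (T : R -> R) (a b L : R) : a < b ->
  (forall u v, a < u -> u < v -> v < b -> T u < T v) ->
  (forall u, a < u < b -> L <= T u) ->
  exists A, (forall u, a < u < b -> A < T u) /\
            (forall t, A < t -> exists u, a < u < b /\ T u < t).
Proof.
  intros Hab Hincr HL.
  destruct (increasing_sup (fun v => - T (- v)) (- b) (- a) (- L)) as [B [HB HBsup]].
  - lra.
  - intros u v Hu Huv Hv. apply Ropp_lt_contravar, Hincr; lra.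
  - intros u Hu. apply Ropp_le_contravar, HL. lra.
  - exists (- B). split.
    + intros u Hu. specialize (HB (- u)). rewrite Ropp_involutive in HB. lra.
    + intros t Ht. destruct (HBsup (- t)) as [v [Hv Htv]]; [lra|].
      exists (- v). split; lra.
Qed.

Section ClampedInverse.

Variables (T f : R -> R) (zm zp A B : R).
Hypothesis Hz : zm < zp.
Hypothesis HT : forall u, zm < u < zp -> is_derive T u (f u).
Hypothesis Hf : forall u, zm < u < zp -> 0 < f u.
Hypothesis Hrange : forall u, zm < u < zp -> A < T u < B.
Hypothesis HA : forall t, A < t -> exists u, zm < u < zp /\ T u < t.
Hypothesis HB : forall t, t < B -> exists u, zm < u < zp /\ t < T u.

Definition clamped_inverse (t : R) : R :=
  if Rle_dec t A then zm
  else if Rle_dec B t then zp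
  else epsilon (inhabits zm) (fun u => zm < u < zp /\ T u = t).

Let chi := clamped_inverse.

Let T_incr := incr_of_derive_pos T f zm zp HT Hf.

Lemma clamped_inverse_A_lt_B : A < B.
Proof. destruct (Hrange ((zm + zp) / 2)); lra. Qed.

Lemma clamped_inverse_surj t : A < t < B -> exists u, zm < u < zp /\ T u = t.
Proof.
  intros [HAt HtB].
  destruct (HA t HAt) as [u1 [Hu1 Hu1t]]. destruct (HB t HtB) as [u2 [Hu2 Hu2t]].
  assert (Hu12 : u1 < u2).
  { apply Rnot_le_lt. intros Hle. destruct (Req_dec u2 u1) as [->|Hne]; [lra|].
    pose proof (T_incr u2 u1). lra. }
  destruct (IVT_interv (fun u => T u - t) u1 u2) as [u [Hu Hut]]; [| lra| lra| lra|].
  - intros x Hx. apply continuity_pt_minus; [|apply continuity_pt_const; now intros ? ?].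
    apply (is_derive_continuity_pt T x (f x)), HT. lra.
  - exists u. split; lra.
Qed.

Lemma clamped_inverse_below t : t <= A -> chi t = zm.
Proof. intros Ht. unfold chi, clamped_inverse. destruct (Rle_dec t A); [reflexivity| lra]. Qed.

Lemma clamped_inverse_above t : B <= t -> chi t = zp.
Proof.
  intros Ht. pose proof clamped_inverse_A_lt_B.
  unfold chi, clamped_inverse. destruct (Rle_dec t A); [lra|].
  destruct (Rle_dec B t); [reflexivity| lra].
Qed.

Lemma clamped_inverse_spec t : A < t < B -> zm < chi t < zp /\ T (chi t) = t.
Proof.
  intros Ht. unfold chi, clamped_inverse.
  destruct (Rle_dec t A); [lra|]. destruct (Rle_dec B t); [lra|].
  apply epsilon_spec, clamped_inverse_surj, Ht.
Qed.

Lemma clamped_inverse_bounds t : zm <= chi t <= zp.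
Proof.
  destruct (Rle_dec t A); [rewrite clamped_inverse_below; lra|].
  destruct (Rle_dec B t); [rewrite clamped_inverse_above; lra|].
  destruct (clamped_inverse_spec t); lra.
Qed.

Lemma clamped_inverse_le u t : zm < u < zp -> t <= T u -> chi t <= u.
Proof.
  intros Hu Ht. destruct (Rle_dec t A); [rewrite clamped_inverse_below; lra|].
  pose proof (Hrange u Hu).
  destruct (clamped_inverse_spec t) as [Hc HTc]; [lra|].
  apply Rnot_lt_le. intros Hlt. pose proof (T_incr u (chi t)). lra.
Qed.

Lemma clamped_inverse_ge u t : zm < u < zp -> T u <= t -> u <= chi t.
Proof.
  intros Hu Ht. destruct (Rle_dec B t); [rewrite clamped_inverse_above; lra|].
  pose proof (Hrange u Hu).
  destruct (clamped_inverse_spec t) as [Hc HTc]; [lra|].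
  apply Rnot_lt_le. intros Hlt. pose proof (T_incr (chi t) u). lra.
Qed.

Lemma clamped_inverse_continuous t : continuity_pt chi t.
Proof.
  intros eps Heps. pose proof (clamped_inverse_bounds t).
  assert (Hup : exists d, 0 < d /\ forall y, Rabs (y - t) < d -> chi y < chi t + eps).
  { destruct (Rlt_dec zp (chi t + eps)).
    - exists 1. split; [lra|]. intros y _. pose proof (clamped_inverse_bounds y). lra.
    - set (u := chi t + Rmin (eps / 2) ((zp - chi t) / 2)).
      pose proof (Rmin_l (eps / 2) ((zp - chi t) / 2)).
      assert (0 < Rmin (eps / 2) ((zp - chi t) / 2)) by (apply Rmin_pos; lra).
      assert (Hu : zm < u < zp) by (unfold u; lra).
      assert (Htu : t < T u) by (apply Rnot_le_lt; intros Hle;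
                                 pose proof (clamped_inverse_ge u t Hu Hle); unfold u in *; lra).
      exists (T u - t). split; [lra|]. intros y Hy.
      assert (chi y <= u) by (apply clamped_inverse_le; [exact Hu| split_Rabs; lra]).
      unfold u in *. lra. }
  assert (Hlow : exists d, 0 < d /\ forall y, Rabs (y - t) < d -> chi t - eps < chi y).
  { destruct (Rlt_dec (chi t - eps) zm).
    - exists 1. split; [lra|]. intros y _. pose proof (clamped_inverse_bounds y). lra.
    - set (u := chi t - Rmin (eps / 2) ((chi t - zm) / 2)).
      pose proof (Rmin_l (eps / 2) ((chi t - zm) / 2)).
      assert (0 < Rmin (eps / 2) ((chi t - zm) / 2)) by (apply Rmin_pos; lra).
      assert (Hu : zm < u < zp) by (unfold u; lra).
      assert (Htu : T u < t) by (apply Rnot_le_lt; intros Hle;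
                                 pose proof (clamped_inverse_le u t Hu Hle); unfold u in *; lra).
      exists (t - T u). split; [lra|]. intros y Hy.
      assert (u <= chi y) by (apply clamped_inverse_ge; [exact Hu| split_Rabs; lra]).
      unfold u in *. lra. }
  destruct Hup as [d1 [Hd1 Hup]]. destruct Hlow as [d2 [Hd2 Hlow]].
  exists (Rmin d1 d2). split; [apply Rmin_pos; lra|].
  intros y [_ Hy]. simpl in *. unfold R_dist in *.
  pose proof (Rmin_l d1 d2). pose proof (Rmin_r d1 d2).
  specialize (Hup y ltac:(lra)). specialize (Hlow y ltac:(lra)). split_Rabs; lra.
Qed.

Lemma is_derive_clamped_inverse t : A < t < B -> is_derive chi t (/ f (chi t)).
Proof.
  intros Ht. destruct (clamped_inverse_spec t Ht) as [Hc _].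
  apply (is_derive_inverse T chi t (f (chi t)) (Rmin (t - A) (B - t))).
  - apply Rmin_pos; lra.
  - apply clamped_inverse_continuous.
  - apply HT, Hc.
  - apply Rgt_not_eq, Hf, Hc.
  - intros y Hy. pose proof (Rmin_l (t - A) (B - t)). pose proof (Rmin_r (t - A) (B - t)).
    apply clamped_inverse_spec. split_Rabs; lra.
Qed.

End ClampedInverse.

Lemma ge_of_power_singularity_left (T f : R -> R) (a m c g : R) :
  a < m -> 0 <= c -> 0 < g < 1 ->
  (forall x, a < x <= m -> is_derive T x (f x)) ->
  (forall x, a < x < m -> f x <= c * Rpower (x - a) (- g)) ->
  forall u, a < u <= m -> T m - c / (1 - g) * Rpower (m - a) (1 - g) <= T u.
Proof.
  intros Ham Hc Hg HT Hf u Hu.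
  set (K := fun x => c / (1 - g) * Rpower (x - a) (1 - g)).
  assert (HK : forall x, a < x -> is_derive K x (c * Rpower (x - a) (- g))).
  { intros x Hx. unfold K.
    replace (c * Rpower (x - a) (- g))
      with (c / (1 - g) * ((1 - g) * Rpower (x - a) (1 - g - 1) * 1))
      by (replace (1 - g - 1) with (- g) by ring; field; lra).
    apply is_derive_scal, (is_derive_Rpower_comp (fun y => y - a)); [lra|].
    auto_derive; [easy| ring]. }
  assert (Hcmp : T m - T u <= K m - K u).
  { apply (sub_le_of_derive_le T f K (fun x => c * Rpower (x - a) (- g))); [lra| | |].
    - intros x Hx. apply HT. lra.
    - intros x Hx. apply HK. lra.
    - intros x Hx. apply Hf. lra. }
  assert (0 <= K u) by (unfold K; apply Rmult_le_pos; [apply Rdiv_le_0_compat; lra|];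
                        left; apply Rpower_gt_0).
  unfold K in *. lra.
Qed.

Lemma le_of_power_singularity_right (T f : R -> R) (m b c g : R) :
  m < b -> 0 <= c -> 0 < g < 1 ->
  (forall x, m <= x < b -> is_derive T x (f x)) ->
  (forall x, m < x < b -> f x <= c * Rpower (b - x) (- g)) ->
  forall u, m <= u < b -> T u <= T m + c / (1 - g) * Rpower (b - m) (1 - g).
Proof.
  intros Hmb Hc Hg HT Hf u Hu.
  set (K := fun x => - (c / (1 - g) * Rpower (b - x) (1 - g))).
  assert (HK : forall x, x < b -> is_derive K x (c * Rpower (b - x) (- g))).
  { intros x Hx. unfold K.
    replace (c * Rpower (b - x) (- g))
      with (- (c / (1 - g) * ((1 - g) * Rpower (b - x) (1 - g - 1) * -1)))
      by (replace (1 - g - 1) with (- g) by ring; field; lra).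
    apply (is_derive_opp (fun x => c / (1 - g) * Rpower (b - x) (1 - g))).
    apply is_derive_scal, (is_derive_Rpower_comp (fun y => b - y)); [lra|].
    auto_derive; [easy| ring]. }
  assert (Hcmp : T u - T m <= K u - K m).
  { apply (sub_le_of_derive_le T f K (fun x => c * Rpower (b - x) (- g))); [lra| | |].
    - intros x Hx. apply HT. lra.
    - intros x Hx. apply HK. lra.
    - intros x Hx. apply Hf. lra. }
  assert (0 <= - K u) by (unfold K; rewrite Ropp_involutive; apply Rmult_le_pos;
                          [apply Rdiv_le_0_compat; lra| left; apply Rpower_gt_0]).
  unfold K in *. lra.
Qed.

Lemma first_zero (h : R -> R) (a b : R) : a < b ->
  (forall x, a <= x <= b -> continuity_pt h x) -> 0 < h a -> h b <= 0 ->
  exists z, a < z <= b /\ h z = 0 /\ forall u, a <= u < z -> 0 < h u.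
Proof.
  intros Hab Hc Ha Hb.
  set (S := fun x => a <= x <= b /\ forall u, a <= u <= x -> 0 < h u).
  destruct (completeness S) as [z [Hub Hlub]].
  - exists b. intros x [Hx _]. lra.
  - exists a. split; [lra|]. intros u Hu. replace u with a by lra. exact Ha.
  - assert (Haz : a <= z) by (apply Hub; split; [lra|]; intros u Hu; replace u with a by lra; exact Ha).
    assert (Hzb : z <= b) by (apply Hlub; intros x [Hx _]; lra).
    assert (Hbefore : forall u, a <= u < z -> 0 < h u).
    { intros u Hu. apply NNPP. intros Hn.
      enough (z <= u) by lra. apply Hlub. intros x [Hx Hpos].
      apply Rnot_lt_le. intros Hux. apply Hn, Hpos. lra. }
    assert (Hzero : h z = 0).
    { apply NNPP. intros Hz0.
      destruct (continuity_pt_ball h z (Hc z (conj Haz Hzb)) (Rabs (h z))) as [eta [Heta Hnear]].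
      { apply Rabs_pos_lt, Hz0. }
      destruct (Rlt_dec 0 (h z)).
      - assert (Hzb' : z < b) by (destruct (Req_dec z b) as [->|]; lra).
        set (x := Rmin b (z + eta / 2)).
        assert (x <= z).
        { apply Hub. split; [unfold x, Rmin; destruct Rle_dec; lra|].
          intros u Hu. destruct (Rlt_dec u z); [apply Hbefore; lra|].
          specialize (Hnear u). unfold x, Rmin in Hu; destruct Rle_dec; split_Rabs; lra. }
        unfold x, Rmin in *; destruct Rle_dec; lra.
      - assert (Haz' : a < z) by (destruct (Req_dec a z) as [<-|]; lra).
        set (u := Rmax a (z - eta / 2)).
        assert (Hu : a <= u < z) by (unfold u, Rmax; destruct Rle_dec; lra).
        specialize (Hbefore u Hu). specialize (Hnear u).
        unfold u, Rmax in *; destruct Rle_dec; split_Rabs; lra. }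
    exists z. split; [|split; [exact Hzero| exact Hbefore]].
    destruct (Req_dec a z) as [<-|]; lra.
Qed.

Lemma quadratic_growth (Gf g dg : R -> R) (z w c : R) : z < w ->
  (forall u, z < u < w -> is_derive Gf u (g u)) ->
  (forall u, z <= u <= w -> continuity_pt Gf u) ->
  (forall u, z < u < w -> is_derive g u (dg u)) ->
  (forall u, z <= u <= w -> continuity_pt g u) ->
  (forall u, z < u < w -> c <= dg u) -> g z = 0 ->
  forall s, z <= s <= w -> c / 2 * (s - z) ^ 2 <= Gf s - Gf z.
Proof.
  intros Hzw HGf HGc Hg Hgc Hc Hgz s Hs.
  assert (Hlin : forall x, z <= x <= w -> c * (x - z) <= g x).
  { intros x Hx.
    enough (g z - c * z <= g x - c * x) by lra.
    apply (le_of_derive_nonneg (fun x => g x - c * x) (fun x => dg x - c)); [lra| | |].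
    - intros y Hy. apply (is_derive_minus g (fun x => c * x)); [apply Hg; lra|].
      auto_derive; [easy| ring].
    - intros y Hy. apply continuity_pt_minus; [apply Hgc; lra|].
      apply continuity_pt_scal, continuity_pt_id.
    - intros y Hy. specialize (Hc y ltac:(lra)). lra. }
  enough (Gf z - c / 2 * (z - z) ^ 2 <= Gf s - c / 2 * (s - z) ^ 2) by lra.
  apply (le_of_derive_nonneg (fun x => Gf x - c / 2 * (x - z) ^ 2) (fun x => g x - c * (x - z)));
    [lra| | |].
  - intros y Hy. apply (is_derive_minus Gf (fun x => c / 2 * (x - z) ^ 2)); [apply HGf; lra|].
    auto_derive; [easy| field].
  - intros y Hy. apply continuity_pt_minus; [apply HGc; lra|].
    apply (is_derive_continuity_pt _ _ (c * (y - z))). auto_derive; [easy| field].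
  - intros y Hy. specialize (Hlin y ltac:(lra)). lra.
Qed.

Lemma linear_growth_before (Gf g : R -> R) (z : R) :
  (forall u, is_derive Gf u (g u)) -> continuity_pt g z -> g z < 0 ->
  exists b d, 0 < b /\ 0 < d /\ forall s, z - d < s < z -> b * (z - s) <= Gf s - Gf z.
Proof.
  intros HGf Hgc Hgz.
  destruct (continuity_pt_ball g z Hgc (- g z / 2)) as [d [Hd Hnear]]; [lra|].
  exists (- g z / 2), d. split; [lra| split; [exact Hd|]]. intros s Hs.
  set (b := - g z / 2).
  enough (- (Gf s + b * s) <= - (Gf z + b * z)) by lra.
  apply (le_of_derive_nonneg (fun x => - (Gf x + b * x)) (fun x => - (g x + b))); [lra| | |].
  - intros x Hx. apply (is_derive_opp (fun x => Gf x + b * x)).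
    apply (is_derive_plus Gf (fun x => b * x)); [apply HGf|]. auto_derive; [easy| ring].
  - intros x Hx. apply (is_derive_continuity_pt _ _ (- (g x + b))).
    apply (is_derive_opp (fun x => Gf x + b * x)).
    apply (is_derive_plus Gf (fun x => b * x)); [apply HGf|]. auto_derive; [easy| ring].
  - intros x Hx. specialize (Hnear x). unfold b in *. split_Rabs; lra.
Qed.

Lemma inv_Rpower_le (E b y c : R) : 0 < b -> 0 < y -> 0 < c -> b * y <= E ->
  / Rpower E c <= Rpower b (- c) * Rpower y (- c).
Proof.
  intros Hb Hy Hc HE.
  rewrite Rpower_mult_distr, Rpower_Ropp by assumption.
  apply Rinv_le_contravar; [apply Rpower_gt_0|].
  apply Rle_Rpower_l; [lra| split; [apply Rmult_lt_0_compat|]; assumption].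
Qed.

Lemma continuity_pt_bounded_mul (s q : R -> R) (a : R) :
  (forall y, Rabs (s y) <= 1) -> continuity_pt q a -> q a = 0 ->
  continuity_pt (fun y => s y * q y) a.
Proof.
  intros Hs Hq Hqa eps Heps.
  destruct (continuity_pt_ball q a Hq eps Heps) as [eta [Heta Hnear]].
  exists eta. split; [exact Heta|]. intros y [_ Hy]. simpl in *. unfold R_dist in *.
  specialize (Hnear y Hy). rewrite Hqa, Rminus_0_r in Hnear.
  rewrite Hqa, Rmult_0_r, Rminus_0_r, Rabs_mult.
  pose proof (Rabs_pos (q y)). specialize (Hs y). nra.
Qed.

Lemma Rabs_sign_le_1 x : Rabs (sign x) <= 1.
Proof.
  destruct (Rtotal_order x 0) as [Hx|[->|Hx]].
  - rewrite sign_eq_m1 by exact Hx. rewrite Rabs_left; lra.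
  - rewrite sign_0, Rabs_R0. lra.
  - rewrite sign_eq_1, Rabs_R1 by exact Hx. lra.
Qed.

Lemma phi_p_sign_rpow (p x E : R) : 2 < p ->
  phi_p p (- sign x * rpow E (/ p)) = - sign x * rpow E ((p - 1) / p).
Proof.
  intros Hp. unfold phi_p.
  destruct (Rlt_dec 0 E) as [HE|HE];
    [|rewrite (rpow_nonpos E (/ p)), (rpow_nonpos E ((p - 1) / p)) by lra; ring].
  destruct (Req_dec x 0) as [->|Hx]; [rewrite sign_0; ring|].
  assert (Habs : Rabs (- sign x * Rpower E (/ p)) = Rpower E (/ p)).
  { rewrite Rabs_mult, Rabs_Ropp, (Rabs_right (Rpower E _)) by (left; apply Rpower_gt_0).
    destruct (Rlt_dec 0 x).
    - rewrite sign_eq_1, Rabs_R1 by lra. ring.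
    - rewrite sign_eq_m1 by lra. rewrite Rabs_left by lra. ring. }
  rewrite (rpow_Rpower E), (rpow_Rpower E), Habs, rpow_Rpower, Rpower_mult
    by (try apply Rpower_gt_0; exact HE).
  replace ((p - 1) / p) with (/ p * (p - 2) + / p) by (field; lra).
  rewrite Rpower_plus. ring.
Qed.

Lemma is_derive_affine_comp (f : R -> R) (a s x l : R) :
  is_derive f (a + s * x) l -> is_derive (fun y => f (a + s * y)) x (s * l).
Proof.
  intros Hf. apply (is_derive_comp f (fun y => a + s * y)); [exact Hf|].
  auto_derive; [easy| ring].
Qed.

Section Pulse.

Variables (Gf g : R -> R) (zm zp e p : R).
Hypothesis HGf : forall u, is_derive Gf u (g u).
Hypothesis Hg : forall u, continuity_pt g u.
Hypothesis Hz : zm < zp.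
Hypothesis Hlevel : Gf zp = Gf zm.
Hypothesis Hwell : forall u, zm < u < zp -> Gf zm < Gf u.
Hypothesis Hcrit : g zm = 0.
Hypothesis Hslope : g zp < 0.
Hypothesis Hquad : exists a d, 0 < a /\ 0 < d /\
  forall s, zm < s < zm + d -> a * (s - zm) ^ 2 <= Gf s - Gf zm.
Hypothesis He : 0 < e.
Hypothesis Hp : 2 < p.

(* Along a pulse, the first integral [e (p-1)/p |psi'|^p = Gf psi - Gf zm] gives
   [|psi'| = speed psi] and [|phi_p psi'| = flux psi]. *)
Definition energy (u : R) : R := p * (Gf u - Gf zm) / (e * (p - 1)).
Definition speed (u : R) : R := rpow (energy u) (/ p).
Definition flux (u : R) : R := rpow (energy u) ((p - 1) / p).
Definition travel_time (u : R) : R := RInt (fun s => / speed s) ((zm + zp) / 2) u.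

Lemma energy_pos u : zm < u < zp -> 0 < energy u.
Proof.
  intros Hu. pose proof (Hwell u Hu). unfold energy.
  apply Rdiv_lt_0_compat; [apply Rmult_lt_0_compat|apply Rmult_lt_0_compat]; lra.
Qed.

Lemma energy_zm : energy zm = 0.
Proof. unfold energy. rewrite Rminus_diag. field. lra. Qed.

Lemma energy_zp : energy zp = 0.
Proof. rewrite <- energy_zm. unfold energy. rewrite Hlevel. reflexivity. Qed.

Lemma is_derive_energy u : is_derive energy u (p * g u / (e * (p - 1))).
Proof.
  unfold energy.
  replace (p * g u / (e * (p - 1))) with (/ (e * (p - 1)) * (p * (g u - 0))) by (field; lra).
  apply (is_derive_ext (fun u => / (e * (p - 1)) * (p * (Gf u - Gf zm)))); [intros t; apply Rmult_comm|].
  apply is_derive_scal, is_derive_scal, (is_derive_minus Gf (fun _ => Gf zm));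
    [apply HGf| apply is_derive_Reals, derivable_pt_lim_const].
Qed.

Lemma energy_continuous u : continuity_pt energy u.
Proof. exact (is_derive_continuity_pt _ _ _ (is_derive_energy u)). Qed.

Lemma speed_continuous u : continuity_pt speed u.
Proof.
  apply continuity_pt_comp with (f2 := fun E => rpow E (/ p)); [apply energy_continuous|].
  apply rpow_continuous, Rinv_0_lt_compat. lra.
Qed.

Lemma flux_continuous u : continuity_pt flux u.
Proof.
  apply continuity_pt_comp with (f2 := fun E => rpow E ((p - 1) / p)); [apply energy_continuous|].
  apply rpow_continuous, Rdiv_lt_0_compat; lra.
Qed.

Lemma speed_pos u : zm < u < zp -> 0 < speed u.
Proof. intros Hu. unfold speed. rewrite rpow_Rpower by (apply energy_pos, Hu). apply Rpower_gt_0. Qed.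

Lemma speed_zm : speed zm = 0.
Proof. unfold speed. rewrite energy_zm. apply rpow_nonpos. lra. Qed.

Lemma speed_zp : speed zp = 0.
Proof. unfold speed. rewrite energy_zp. apply rpow_nonpos. lra. Qed.

Lemma flux_zm : flux zm = 0.
Proof. unfold flux. rewrite energy_zm. apply rpow_nonpos. lra. Qed.

Lemma flux_zp : flux zp = 0.
Proof. unfold flux. rewrite energy_zp. apply rpow_nonpos. lra. Qed.

Lemma inv_speed_pos u : zm < u < zp -> 0 < / speed u.
Proof. intros Hu. apply Rinv_0_lt_compat, speed_pos, Hu. Qed.

Lemma is_derive_travel_time u : zm < u < zp -> is_derive travel_time u (/ speed u).
Proof.
  intros Hu.
  assert (Hc : forall x, zm < x < zp -> continuity_pt (fun s => / speed s) x)
    by (intros x Hx; apply continuity_pt_inv; [apply speed_continuous| apply Rgt_not_eq, speed_pos, Hx]).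
  apply (is_derive_RInt (fun s => / speed s) travel_time ((zm + zp) / 2) u).
  - set (d := Rmin (u - zm) (zp - u)).
    assert (Hd : 0 < d) by (apply Rmin_pos; lra).
    assert (d <= u - zm) by apply Rmin_l. assert (d <= zp - u) by apply Rmin_r.
    apply (locally_of_Rabs_lt _ _ d); [exact Hd|]. intros b Hb.
    apply (@RInt_correct R_CompleteNormedModule (fun s => / speed s)).
    apply (@ex_RInt_continuous R_CompleteNormedModule (fun s => / speed s)).
    intros x Hx. apply continuity_pt_filterlim, Hc.
    unfold Rmin, Rmax in Hx. destruct Rle_dec; split_Rabs; lra.
  - apply continuity_pt_filterlim, Hc, Hu.
Qed.

Lemma travel_time_incr u v : zm < u -> u < v -> v < zp -> travel_time u < travel_time v.
Proof. exact (incr_of_derive_pos _ _ zm zp is_derive_travel_time inv_speed_pos u v). Qed.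

Lemma inv_p_bounds : 0 < / p < / 2.
Proof. split; [apply Rinv_0_lt_compat| apply Rinv_lt_contravar]; lra. Qed.

Lemma inv_speed_le_near_zm : exists c d, 0 <= c /\ 0 < d /\
  forall s, zm < s < zm + d -> / speed s <= c * Rpower (s - zm) (- (2 / p)).
Proof.
  destruct Hquad as [a [d [Ha [Hd Hlow]]]]. pose proof inv_p_bounds.
  set (a' := p * a / (e * (p - 1))).
  assert (Ha' : 0 < a') by (apply Rdiv_lt_0_compat; apply Rmult_lt_0_compat; lra).
  exists (Rpower a' (- / p)), d. split; [left; apply Rpower_gt_0| split; [exact Hd|]].
  intros s Hs. assert (Hy : 0 < (s - zm) ^ 2) by (apply pow_lt; lra).
  assert (HE : a' * (s - zm) ^ 2 <= energy s).
  { replace (a' * (s - zm) ^ 2) with (p / (e * (p - 1)) * (a * (s - zm) ^ 2))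
      by (unfold a'; field; lra).
    replace (energy s) with (p / (e * (p - 1)) * (Gf s - Gf zm)) by (unfold energy; field; lra).
    apply Rmult_le_compat_l; [apply Rdiv_le_0_compat; [|apply Rmult_lt_0_compat]; lra|].
    apply Hlow, Hs. }
  unfold speed. rewrite rpow_Rpower by nra.
  replace (Rpower (s - zm) (- (2 / p))) with (Rpower ((s - zm) ^ 2) (- / p)).
  - apply inv_Rpower_le; lra.
  - rewrite <- (Rpower_pow 2), Rpower_mult by lra. f_equal. simpl. field. lra.
Qed.

Lemma inv_speed_le_near_zp : exists c d, 0 <= c /\ 0 < d /\
  forall s, zp - d < s < zp -> / speed s <= c * Rpower (zp - s) (- / p).
Proof.
  destruct (linear_growth_before Gf g zp HGf (Hg zp) Hslope) as [b [d [Hb [Hd Hlow]]]].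
  pose proof inv_p_bounds.
  set (b' := p * b / (e * (p - 1))).
  assert (Hb' : 0 < b') by (apply Rdiv_lt_0_compat; apply Rmult_lt_0_compat; lra).
  exists (Rpower b' (- / p)), d. split; [left; apply Rpower_gt_0| split; [exact Hd|]].
  intros s Hs.
  assert (HE : b' * (zp - s) <= energy s).
  { replace (b' * (zp - s)) with (p / (e * (p - 1)) * (b * (zp - s))) by (unfold b'; field; lra).
    replace (energy s) with (p / (e * (p - 1)) * (Gf s - Gf zp))
      by (unfold energy; rewrite Hlevel; field; lra).
    apply Rmult_le_compat_l; [apply Rdiv_le_0_compat; [|apply Rmult_lt_0_compat]; lra|].
    apply Hlow, Hs. }
  assert (0 < b' * (zp - s)) by (apply Rmult_lt_0_compat; lra).
  unfold speed. rewrite rpow_Rpower by lra.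
  apply inv_Rpower_le; lra.
Qed.

(* [p > 2] makes the singularity [(u - zm)^(-2/p)] integrable: the pulse reaches [zm]
   in finite time. *)
Lemma travel_time_lower : exists L, forall u, zm < u < zp -> L <= travel_time u.
Proof.
  destruct inv_speed_le_near_zm as [c [d [Hc [Hd Hle]]]]. pose proof inv_p_bounds.
  set (m := zm + Rmin d (zp - zm) / 2).
  assert (Hmd : Rmin d (zp - zm) <= d) by apply Rmin_l.
  assert (Hmz : Rmin d (zp - zm) <= zp - zm) by apply Rmin_r.
  assert (0 < Rmin d (zp - zm)) by (apply Rmin_pos; lra).
  assert (Hcorr : 0 <= c / (1 - 2 / p) * Rpower (m - zm) (1 - 2 / p))
    by (apply Rmult_le_pos; [apply Rdiv_le_0_compat; lra| left; apply Rpower_gt_0]).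
  exists (travel_time m - c / (1 - 2 / p) * Rpower (m - zm) (1 - 2 / p)).
  intros u Hu. destruct (Rle_dec u m).
  - apply (ge_of_power_singularity_left travel_time (fun s => / speed s) zm m c (2 / p)).
    + unfold m. lra.
    + exact Hc.
    + lra.
    + intros x Hx. apply is_derive_travel_time. unfold m in Hx. lra.
    + intros x Hx. apply Hle. unfold m in Hx. lra.
    + lra.
  - assert (travel_time m < travel_time u) by (apply travel_time_incr; unfold m in *; lra).
    lra.
Qed.

Lemma travel_time_upper : exists U, forall u, zm < u < zp -> travel_time u <= U.
Proof.
  destruct inv_speed_le_near_zp as [c [d [Hc [Hd Hle]]]]. pose proof inv_p_bounds.
  set (m := zp - Rmin d (zp - zm) / 2).
  assert (Hmd : Rmin d (zp - zm) <= d) by apply Rmin_l.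
  assert (Hmz : Rmin d (zp - zm) <= zp - zm) by apply Rmin_r.
  assert (0 < Rmin d (zp - zm)) by (apply Rmin_pos; lra).
  assert (Hcorr : 0 <= c / (1 - / p) * Rpower (zp - m) (1 - / p))
    by (apply Rmult_le_pos; [apply Rdiv_le_0_compat; lra| left; apply Rpower_gt_0]).
  exists (travel_time m + c / (1 - / p) * Rpower (zp - m) (1 - / p)).
  intros u Hu. destruct (Rle_dec m u).
  - apply (le_of_power_singularity_right travel_time (fun s => / speed s) m zp c (/ p)).
    + unfold m. lra.
    + exact Hc.
    + lra.
    + intros x Hx. apply is_derive_travel_time. unfold m in Hx. lra.
    + intros x Hx. apply Hle. unfold m in Hx. lra.
    + lra.
  - assert (travel_time u < travel_time m) by (apply travel_time_incr; unfold m in *; lra).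
    lra.
Qed.

Lemma travel_time_range : exists A B,
  (forall u, zm < u < zp -> A < travel_time u < B) /\
  (forall t, A < t -> exists u, zm < u < zp /\ travel_time u < t) /\
  (forall t, t < B -> exists u, zm < u < zp /\ t < travel_time u).
Proof.
  destruct travel_time_lower as [L HL]. destruct travel_time_upper as [U HU].
  destruct (increasing_inf travel_time zm zp L Hz travel_time_incr HL) as [A [HA HAinf]].
  destruct (increasing_sup travel_time zm zp U Hz travel_time_incr HU) as [B [HB HBsup]].
  exists A, B. split; [|split; assumption]. intros u Hu. split; [apply HA| apply HB]; exact Hu.
Qed.

Section Profile.

Variables A B : R.
Hypothesis Hrange : forall u, zm < u < zp -> A < travel_time u < B.
Hypothesis HA : forall t, A < t -> exists u, zm < u < zp /\ travel_time u < t.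
Hypothesis HB : forall t, t < B -> exists u, zm < u < zp /\ t < travel_time u.

Let profile := clamped_inverse travel_time zm zp A B.

Let A_lt_B : A < B := clamped_inverse_A_lt_B travel_time zm zp A B Hz Hrange.

Let profile_spec : forall t, A < t < B -> zm < profile t < zp /\ travel_time (profile t) = t :=
  clamped_inverse_spec travel_time _ zm zp A B is_derive_travel_time inv_speed_pos HA HB.

Let profile_below : forall t, t <= A -> profile t = zm := clamped_inverse_below travel_time zm zp A B.

Let profile_above : forall t, B <= t -> profile t = zp :=
  clamped_inverse_above travel_time zm zp A B Hz Hrange.

Let profile_bounds : forall t, zm <= profile t <= zp :=
  clamped_inverse_bounds travel_time _ zm zp A B Hz is_derive_travel_time inv_speed_pos
    Hrange HA HB.

Let profile_continuous : forall t, continuity_pt profile t :=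
  clamped_inverse_continuous travel_time _ zm zp A B Hz is_derive_travel_time inv_speed_pos
    Hrange HA HB.

Let is_derive_profile_inside : forall t, A < t < B -> is_derive profile t (/ / speed (profile t)) :=
  is_derive_clamped_inverse travel_time _ zm zp A B Hz is_derive_travel_time inv_speed_pos
    Hrange HA HB.

Lemma is_derive_profile t : is_derive profile t (speed (profile t)).
Proof.
  assert (Hoff : forall t, t <> A -> t <> B -> is_derive profile t (speed (profile t))).
  { clear t. intros t HtA HtB. destruct (Rlt_dec t A); [|destruct (Rlt_dec B t)].
    - rewrite profile_below, speed_zm by lra.
      apply is_derive_ext_loc with (fun _ => zm); [|apply is_derive_Reals, derivable_pt_lim_const].
      apply (locally_of_Rabs_lt _ _ (A - t)); [lra|]. intros y Hy.
      symmetry. apply profile_below. split_Rabs; lra.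
    - rewrite profile_above, speed_zp by lra.
      apply is_derive_ext_loc with (fun _ => zp); [|apply is_derive_Reals, derivable_pt_lim_const].
      apply (locally_of_Rabs_lt _ _ (t - B)); [lra|]. intros y Hy.
      symmetry. apply profile_above. split_Rabs; lra.
    - destruct (profile_spec t) as [Hc _]; [lra|].
      rewrite <- (Rinv_inv (speed (profile t))). apply is_derive_profile_inside. lra. }
  destruct (classic (t = A \/ t = B)) as [Hend|Hint]; [|apply Hoff; tauto].
  apply (is_derive_of_continuous_derivative profile (fun t => speed (profile t)) t (B - A)); [lra| | |].
  - apply profile_continuous.
  - apply continuity_pt_comp with (f2 := speed); [apply profile_continuous| apply speed_continuous].
  - intros y Hyt Hy. apply Hoff; destruct Hend; subst; split_Rabs; lra.
Qed.

Lemma is_derive_flux_profile t : t < B -> is_derive (fun t => flux (profile t)) t (g (profile t) / e).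
Proof.
  intros HtB.
  assert (Hoff : forall t, t <> A -> t < B ->
                  is_derive (fun t => flux (profile t)) t (g (profile t) / e)).
  { clear t HtB. intros t HtA HtB. destruct (Rlt_dec t A).
    - rewrite profile_below, Hcrit by lra. unfold Rdiv; rewrite Rmult_0_l.
      apply is_derive_ext_loc with (fun _ => 0); [|apply is_derive_Reals, derivable_pt_lim_const].
      apply (locally_of_Rabs_lt _ _ (A - t)); [lra|]. intros y Hy.
      rewrite profile_below, flux_zm; [reflexivity|]. split_Rabs; lra.
    - destruct (profile_spec t) as [Hc _]; [lra|]. pose proof (energy_pos _ Hc) as HE.
      apply is_derive_ext_loc with (fun t => Rpower (energy (profile t)) ((p - 1) / p)).
      + apply (locally_of_Rabs_lt _ _ (Rmin (t - A) (B - t))); [apply Rmin_pos; lra|].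
        intros y Hy. pose proof (Rmin_l (t - A) (B - t)). pose proof (Rmin_r (t - A) (B - t)).
        unfold flux. rewrite rpow_Rpower; [reflexivity|].
        apply energy_pos, profile_spec. split_Rabs; lra.
      + replace (g (profile t) / e) with ((p - 1) / p * Rpower (energy (profile t)) ((p - 1) / p - 1)
                                       * (speed (profile t) * (p * g (profile t) / (e * (p - 1))))).
        * apply (is_derive_Rpower_comp (fun t => energy (profile t))); [exact HE|].
          apply (is_derive_comp energy profile); [apply is_derive_energy| apply is_derive_profile].
        * unfold speed. rewrite rpow_Rpower by exact HE.
          transitivity ((p - 1) / p * (p / (e * (p - 1))) * g (profile t) *
                          (Rpower (energy (profile t)) ((p - 1) / p - 1) * Rpower (energy (profile t)) (/ p)));
            [field; lra|].
          rewrite <- Rpower_plus. replace ((p - 1) / p - 1 + / p) with 0 by (field; lra).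
          rewrite Rpower_O by exact HE. field. lra. }
  destruct (Req_dec t A) as [->|HtA]; [|exact (Hoff t HtA HtB)].
  apply (is_derive_of_continuous_derivative _ (fun t => g (profile t) / e) A (B - A)); [lra| | |].
  - apply continuity_pt_comp with (f2 := flux); [apply profile_continuous| apply flux_continuous].
  - apply continuity_pt_div; [|apply continuity_pt_const; now intros ? ?| lra].
    apply continuity_pt_comp with (f2 := g); [apply profile_continuous| apply Hg].
  - intros y Hy HyA. apply Hoff; [exact Hy|]. split_Rabs; lra.
Qed.

Definition pulse (x : R) : R := clamped_inverse travel_time zm zp A B (B - Rabs x).

Lemma pulse_continuous x : continuity_pt pulse x.
Proof.
  apply continuity_pt_comp with (f2 := profile); [|apply profile_continuous].
  apply continuity_pt_minus; [apply continuity_pt_const; now intros ? ?|].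
  apply continuity_pt_filterlim, continuous_Rabs.
Qed.

Lemma pulse_0 : pulse 0 = zp.
Proof. unfold pulse. rewrite Rabs_R0, Rminus_0_r. apply profile_above. lra. Qed.

Lemma pulse_bounds x : zm <= pulse x <= zp.
Proof. apply profile_bounds. Qed.

Lemma pulse_outside x : B - A <= Rabs x -> pulse x = zm.
Proof. intros Hx. apply profile_below. lra. Qed.

Lemma pulse_inside x : x <> 0 -> Rabs x < B - A -> zm < pulse x < zp.
Proof. intros Hx0 Hx. apply profile_spec. pose proof (Rabs_pos_lt x Hx0). lra. Qed.

Lemma pulse_reflect x : x <> 0 -> pulse x = profile (B - sign x * x).
Proof.
  intros Hx. unfold pulse. replace (B - Rabs x) with (B - sign x * x); [reflexivity|].
  destruct (Rlt_dec 0 x).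
  - rewrite sign_eq_1, Rabs_right by lra. ring.
  - rewrite sign_eq_m1, Rabs_left by lra. ring.
Qed.

Lemma is_derive_pulse x : is_derive pulse x (- sign x * speed (pulse x)).
Proof.
  assert (Hoff : forall x, x <> 0 -> is_derive pulse x (- sign x * speed (pulse x))).
  { clear x. intros x Hx.
    apply is_derive_ext_loc with (fun y => profile (B + - sign x * y)).
    - apply (locally_of_Rabs_lt _ _ (Rabs x)); [apply Rabs_pos_lt, Hx|]. intros y Hy.
      assert (Hy0 : y <> 0) by (intros ->; rewrite Rminus_0_l, Rabs_Ropp in Hy; lra).
      rewrite pulse_reflect by exact Hy0.
      replace (sign y) with (sign x);
        [replace (B + - sign x * y) with (B - sign x * y) by ring; reflexivity|].
      destruct (Rlt_dec 0 x); [rewrite (sign_eq_1 x), sign_eq_1 | rewrite (sign_eq_m1 x), sign_eq_m1];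
        try lra; split_Rabs; lra.
    - rewrite pulse_reflect by exact Hx. apply is_derive_affine_comp.
      replace (B + - sign x * x) with (B - sign x * x) by ring. apply is_derive_profile. }
  destruct (Req_dec x 0) as [->|Hx]; [|exact (Hoff x Hx)].
  apply (is_derive_of_continuous_derivative _ (fun x => - sign x * speed (pulse x)) 0 1);
    [lra| apply pulse_continuous| |intros y Hy _; exact (Hoff y Hy)].
  apply continuity_pt_bounded_mul.
  - intros y. rewrite Rabs_Ropp. apply Rabs_sign_le_1.
  - apply continuity_pt_comp with (f2 := speed); [apply pulse_continuous| apply speed_continuous].
  - rewrite pulse_0. apply speed_zp.
Qed.

Lemma is_derive_pulse_flux x :
  is_derive (fun y => - sign y * flux (pulse y)) x (g (pulse x) / e).
Proof.
  assert (Hoff : forall x, x <> 0 -> is_derive (fun y => - sign y * flux (pulse y)) x (g (pulse x) / e)).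
  { clear x. intros x Hx.
    apply is_derive_ext_loc with (fun y => - sign x * flux (profile (B + - sign x * y))).
    - apply (locally_of_Rabs_lt _ _ (Rabs x)); [apply Rabs_pos_lt, Hx|]. intros y Hy.
      assert (Hy0 : y <> 0) by (intros ->; rewrite Rminus_0_l, Rabs_Ropp in Hy; lra).
      rewrite pulse_reflect by exact Hy0.
      replace (sign y) with (sign x);
        [replace (B + - sign x * y) with (B - sign x * y) by ring; reflexivity|].
      destruct (Rlt_dec 0 x); [rewrite (sign_eq_1 x), sign_eq_1 | rewrite (sign_eq_m1 x), sign_eq_m1];
        try lra; split_Rabs; lra.
    - replace (g (pulse x) / e) with (- sign x * (- sign x * (g (pulse x) / e))).
      + apply is_derive_scal, (is_derive_affine_comp (fun t => flux (profile t)) B (- sign x) x).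
        rewrite pulse_reflect by exact Hx.
        replace (B + - sign x * x) with (B - sign x * x) by ring.
        apply is_derive_flux_profile.
        destruct (Rlt_dec 0 x); [rewrite sign_eq_1 | rewrite sign_eq_m1]; lra.
      + destruct (Rlt_dec 0 x); [rewrite sign_eq_1 by lra | rewrite sign_eq_m1 by lra]; ring. }
  destruct (Req_dec x 0) as [->|Hx]; [|exact (Hoff x Hx)].
  apply (is_derive_of_continuous_derivative _ (fun x => g (pulse x) / e) 0 1);
    [lra| | |intros y Hy _; exact (Hoff y Hy)].
  - apply continuity_pt_bounded_mul.
    + intros y. rewrite Rabs_Ropp. apply Rabs_sign_le_1.
    + apply continuity_pt_comp with (f2 := flux); [apply pulse_continuous| apply flux_continuous].
    + rewrite pulse_0. apply flux_zp.
  - apply continuity_pt_div; [|apply continuity_pt_const; now intros ? ?| lra].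
    apply continuity_pt_comp with (f2 := g); [apply pulse_continuous| apply Hg].
Qed.

Lemma pulse_spec : 0 < B - A /\
  (forall x, ex_derive pulse x) /\
  (forall x, is_derive (fun y => phi_p p (Derive pulse y)) x (g (pulse x) / e)) /\
  pulse 0 = zp /\ (forall x, pulse x <= pulse 0) /\
  (forall x, B - A <= Rabs x -> pulse x = zm) /\
  (forall x, - (B - A) < x < 0 -> 0 < Derive pulse x) /\
  (forall x, 0 < x < B - A -> Derive pulse x < 0).
Proof.
  assert (HD : forall x, Derive pulse x = - sign x * speed (pulse x))
    by (intros x; apply is_derive_unique, is_derive_pulse).
  assert (Hspeed : forall x, x <> 0 -> Rabs x < B - A -> 0 < speed (pulse x))
    by (intros x Hx0 Hx; apply speed_pos, pulse_inside; assumption).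
  split; [lra|]. split; [intros x; eexists; apply is_derive_pulse|].
  split; [|split; [exact pulse_0|]; split; [intros x; rewrite pulse_0; apply pulse_bounds|]].
  - intros x. apply is_derive_ext with (fun y => - sign y * flux (pulse y));
      [|apply is_derive_pulse_flux].
    intros y. rewrite HD. symmetry. apply phi_p_sign_rpow, Hp.
  - split; [exact pulse_outside|]. split.
    + intros x Hx. rewrite HD, sign_eq_m1 by lra.
      assert (0 < speed (pulse x)) by (apply Hspeed; split_Rabs; lra). lra.
    + intros x Hx. rewrite HD, sign_eq_1 by lra.
      assert (0 < speed (pulse x)) by (apply Hspeed; split_Rabs; lra). lra.
Qed.

End Profile.

Theorem compact_pulse_exists : exists psi om, 0 < om /\
  (forall x, ex_derive psi x) /\
  (forall x, is_derive (fun y => phi_p p (Derive psi y)) x (g (psi x) / e)) /\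
  psi 0 = zp /\ (forall x, psi x <= psi 0) /\
  (forall x, om <= Rabs x -> psi x = zm) /\
  (forall x, - om < x < 0 -> 0 < Derive psi x) /\
  (forall x, 0 < x < om -> Derive psi x < 0).
Proof.
  destruct travel_time_range as [A [B [Hrange [HA HB]]]].
  exists (pulse A B), (B - A). eapply pulse_spec; eassumption.
Qed.

End Pulse.

Definition dF (th u : R) : R := - u * (1 - u ^ 2) * rpow (Rabs (1 - u ^ 2)) (th - 2).

(* [F''] on [(-1, 1)] *)
Definition d2F (th u : R) : R := Rpower (1 - u ^ 2) (th - 2) * ((2 * th - 1) * u ^ 2 - 1).

Lemma is_derive_one_minus_sq u : is_derive (fun y => 1 - y ^ 2) u (- (2 * u)).
Proof. auto_derive; [easy| ring]. Qed.

Lemma is_derive_F th u : 2 < th -> is_derive (F th) u (dF th u).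
Proof.
  intros Hth. unfold F, dF.
  replace (- u * (1 - u ^ 2) * rpow (Rabs (1 - u ^ 2)) (th - 2))
    with (/ (2 * th) * (- (2 * u) * (th * (1 - u ^ 2) * rpow (Rabs (1 - u ^ 2)) (th - 2))))
    by (field; lra).
  apply is_derive_scal.
  apply (is_derive_comp (fun w => rpow (Rabs w) th) (fun y => 1 - y ^ 2));
    [apply is_derive_rpow_abs, Hth| apply is_derive_one_minus_sq].
Qed.

Lemma is_derive_G th beta u : 2 < th -> is_derive (G th beta) u (dF th u - beta).
Proof.
  intros Hth. unfold G. apply is_derive_Reals.
  apply (derivable_pt_lim_minus (F th) (fun y => beta * y)); [apply is_derive_Reals, is_derive_F, Hth|].
  apply is_derive_Reals. auto_derive; [easy| ring].
Qed.

Lemma Derive_F th u : 2 < th -> Derive (F th) u = dF th u.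
Proof. intros Hth. apply is_derive_unique, is_derive_F, Hth. Qed.

Lemma Derive_G th beta u : 2 < th -> Derive (G th beta) u = dF th u - beta.
Proof. intros Hth. apply is_derive_unique, is_derive_G, Hth. Qed.

Lemma dF_continuous th u : 2 < th -> continuity_pt (dF th) u.
Proof.
  intros Hth. unfold dF.
  assert (Hw : continuity_pt (fun y => 1 - y ^ 2) u)
    by exact (is_derive_continuity_pt _ _ _ (is_derive_one_minus_sq u)).
  apply continuity_pt_mult; [apply continuity_pt_mult; [|exact Hw]|].
  - apply continuity_pt_opp, continuity_pt_id.
  - apply continuity_pt_comp with (f2 := fun w => rpow (Rabs w) (th - 2)); [exact Hw|].
    apply continuity_pt_comp with (f2 := fun z => rpow z (th - 2));
      [apply continuity_pt_filterlim, continuous_Rabs| apply rpow_continuous; lra].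
Qed.

Lemma dG_continuous th beta u : 2 < th -> continuity_pt (fun u => dF th u - beta) u.
Proof.
  intros Hth. apply continuity_pt_minus; [apply dF_continuous, Hth|].
  apply continuity_pt_const. now intros ? ?.
Qed.

Lemma G_continuous th beta u : 2 < th -> continuity_pt (G th beta) u.
Proof. intros Hth. exact (is_derive_continuity_pt _ _ _ (is_derive_G th beta u Hth)). Qed.

Lemma is_derive_dF th u : 2 < th -> -1 < u < 1 -> is_derive (dF th) u (d2F th u).
Proof.
  intros Hth Hu. assert (Hw : 0 < 1 - u ^ 2) by nra.
  apply is_derive_ext_loc with (fun y => - y * (1 - y ^ 2) * Rpower (1 - y ^ 2) (th - 2)).
  - apply (locally_of_Rabs_lt _ _ (Rmin (u + 1) (1 - u))); [apply Rmin_pos; lra|].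
    intros y Hy. pose proof (Rmin_l (u + 1) (1 - u)). pose proof (Rmin_r (u + 1) (1 - u)).
    unfold dF. rewrite Rabs_right, rpow_Rpower; [reflexivity| |]; split_Rabs; nra.
  - replace (d2F th u) with ((3 * u ^ 2 - 1) * Rpower (1 - u ^ 2) (th - 2) +
       (- u * (1 - u ^ 2)) * ((th - 2) * Rpower (1 - u ^ 2) (th - 2 - 1) * - (2 * u))).
    + apply is_derive_Reals.
      apply (derivable_pt_lim_mult (fun y => - y * (1 - y ^ 2)) (fun y => Rpower (1 - y ^ 2) (th - 2)));
        apply is_derive_Reals; [auto_derive; [easy| ring]|].
      exact (is_derive_Rpower_comp _ u _ (th - 2) Hw (is_derive_one_minus_sq u)).
    + assert (E : Rpower (1 - u ^ 2) (th - 2) = (1 - u ^ 2) * Rpower (1 - u ^ 2) (th - 2 - 1)).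
      { rewrite <- (Rpower_1 (1 - u ^ 2)) at 2 by exact Hw.
        rewrite <- Rpower_plus. f_equal. ring. }
      unfold d2F. rewrite E. ring.
Qed.

Lemma u_minus_sq th : 1 < th -> u_minus th ^ 2 = / (2 * th - 1).
Proof.
  intros Hth. unfold u_minus.
  replace ((- Rpower (2 * th - 1) (- / 2)) ^ 2)
    with (Rpower (2 * th - 1) (- / 2) * Rpower (2 * th - 1) (- / 2)) by ring.
  rewrite <- Rpower_plus. replace (- / 2 + - / 2) with (- (1)) by field.
  rewrite Rpower_Ropp, Rpower_1 by lra. reflexivity.
Qed.

Lemma u_minus_bounds th : 1 < th -> -1 < u_minus th < 0.
Proof.
  intros Hth. pose proof (u_minus_sq th Hth) as Hsq.
  assert (Hneg : u_minus th < 0) by (unfold u_minus; pose proof (Rpower_gt_0 (2 * th - 1) (- / 2)); lra).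
  assert (/ (2 * th - 1) < 1) by (rewrite <- Rinv_1; apply Rinv_lt_contravar; lra).
  split; [nra| exact Hneg].
Qed.

Lemma u_plus_opp th : u_plus th = - u_minus th.
Proof. unfold u_plus, u_minus. ring. Qed.

Lemma dF_opp th u : dF th (- u) = - dF th u.
Proof. unfold dF. replace ((- u) ^ 2) with (u ^ 2) by ring. ring. Qed.

Lemma F_opp th u : F th (- u) = F th u.
Proof. unfold F. replace ((- u) ^ 2) with (u ^ 2) by ring. reflexivity. Qed.

Lemma F_ge_0 th u : 0 < th -> 0 <= F th u.
Proof.
  intros Hth. unfold F. apply Rmult_le_pos; [left; apply Rinv_0_lt_compat; lra| apply rpow_ge_0].
Qed.

Lemma F_1 th : F th 1 = 0.
Proof.
  unfold F. rewrite rpow_nonpos; [ring|]. replace (1 - 1 ^ 2) with 0 by ring. rewrite Rabs_R0. lra.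
Qed.

Lemma F_m1 th : F th (-1) = 0.
Proof.
  unfold F. rewrite rpow_nonpos; [ring|]. replace (1 - (-1) ^ 2) with 0 by ring. rewrite Rabs_R0.
  lra.
Qed.

Lemma dF_m1 th : dF th (-1) = 0.
Proof. unfold dF. ring. Qed.

Lemma dF_le_0_left th u : u <= -1 -> dF th u <= 0.
Proof.
  intros Hu. unfold dF. pose proof (rpow_ge_0 (Rabs (1 - u ^ 2)) (th - 2)).
  assert (- u * (1 - u ^ 2) <= 0) by nra. nra.
Qed.

Lemma dF_le_0_right th u : 0 <= u <= 1 -> dF th u <= 0.
Proof.
  intros Hu. unfold dF. pose proof (rpow_ge_0 (Rabs (1 - u ^ 2)) (th - 2)).
  assert (- u * (1 - u ^ 2) <= 0) by nra. nra.
Qed.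

Lemma d2F_pos th z : 2 < th -> -1 < z < u_minus th -> 0 < d2F th z.
Proof.
  intros Hth Hz. pose proof (u_minus_sq th ltac:(lra)). pose proof (u_minus_bounds th ltac:(lra)).
  unfold d2F. apply Rmult_lt_0_compat; [apply Rpower_gt_0|].
  assert (/ (2 * th - 1) < z ^ 2) by nra.
  assert ((2 * th - 1) * / (2 * th - 1) < (2 * th - 1) * z ^ 2) by (apply Rmult_lt_compat_l; lra).
  rewrite Rinv_r in * by lra. lra.
Qed.

Lemma d2F_neg th z : 2 < th -> u_minus th < z < 0 -> d2F th z < 0.
Proof.
  intros Hth Hz. pose proof (u_minus_sq th ltac:(lra)). pose proof (u_minus_bounds th ltac:(lra)).
  unfold d2F. rewrite <- (Rmult_0_r (Rpower (1 - z ^ 2) (th - 2))).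
  apply Rmult_lt_compat_l; [apply Rpower_gt_0|].
  assert (z ^ 2 < / (2 * th - 1)) by nra.
  assert ((2 * th - 1) * z ^ 2 < (2 * th - 1) * / (2 * th - 1)) by (apply Rmult_lt_compat_l; lra).
  rewrite Rinv_r in * by lra. lra.
Qed.

Lemma dF_incr th x y : 2 < th -> -1 <= x -> x < y -> y <= u_minus th -> dF th x < dF th y.
Proof.
  intros Hth Hx Hxy Hy. pose proof (u_minus_bounds th ltac:(lra)).
  apply (lt_of_derive_pos (dF th) (d2F th)); [exact Hxy| | |].
  - intros z Hz. apply is_derive_dF; lra.
  - intros z Hz. apply dF_continuous, Hth.
  - intros z Hz. apply d2F_pos; lra.
Qed.

Lemma dF_decr th x y : 2 < th -> u_minus th <= x -> x < y -> y <= 0 -> dF th y < dF th x.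
Proof.
  intros Hth Hx Hxy Hy. pose proof (u_minus_bounds th ltac:(lra)).
  apply Ropp_lt_cancel.
  apply (lt_of_derive_pos (fun z => - dF th z) (fun z => - d2F th z)); [exact Hxy| | |].
  - intros z Hz. apply (is_derive_opp (dF th)), is_derive_dF; lra.
  - intros z Hz. apply continuity_pt_opp, dF_continuous, Hth.
  - intros z Hz. pose proof (d2F_neg th z Hth ltac:(lra)). lra.
Qed.

Lemma dF_u_minus_pos th : 2 < th -> 0 < dF th (u_minus th).
Proof.
  intros Hth. pose proof (u_minus_bounds th ltac:(lra)).
  rewrite <- (dF_m1 th). apply dF_incr; lra.
Qed.

Lemma min_crit_spec th beta zm : 2 < th -> 0 < beta < dF th (u_minus th) ->
  is_min_crit th beta zm -> dF th zm = beta /\ -1 < zm < u_minus th.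
Proof.
  intros Hth Hb [Hc Hmin]. rewrite Derive_G in Hc by exact Hth.
  pose proof (u_minus_bounds th ltac:(lra)).
  split; [lra|]. split.
  - apply Rnot_le_lt. intros Hle. pose proof (dF_le_0_left th zm Hle). lra.
  - destruct (IVT_gen (fun u => dF th u - beta) (-1) (u_minus th) 0) as [z [Hz Hz0]].
    + intros u. apply dG_continuous, Hth.
    + rewrite dF_m1, Rmin_left, Rmax_right; lra.
    + rewrite Rmin_left, Rmax_right in Hz by lra.
      assert (Hzm : zm <= z) by (apply Hmin; rewrite Derive_G by exact Hth; lra).
      destruct (Req_dec z (u_minus th)) as [->|]; lra.
Qed.

Lemma is_solution_of_flux th p eps beta (psi : R -> R) : 2 < th ->
  (forall x, ex_derive psi x) ->
  (forall x, is_derive (fun y => phi_p p (Derive psi y)) x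
               ((dF th (psi x) - beta) / Rpower eps p)) ->
  is_solution th p eps beta psi.
Proof.
  intros Hth Hex Hflux. split; [exact Hex|]. intros x. split; [eexists; apply Hflux|].
  replace (Derive (fun y => phi_p p (Derive psi y)) x)
    with ((dF th (psi x) - beta) / Rpower eps p) by (symmetry; apply is_derive_unique, Hflux).
  rewrite Derive_G by exact Hth.
  field. apply Rgt_not_eq, Rpower_gt_0.
Qed.

Section PulseUp.

Variables (th p eps beta zm : R).
Hypothesis Hth : 2 < th.
Hypothesis Hbeta : 0 < beta < dF th (u_minus th).
Hypothesis Hzm : is_min_crit th beta zm.

Let mid := (zm + u_minus th) / 2.

Lemma G_quadratic_growth : exists c, 0 < c /\
  forall s, zm <= s <= mid -> c / 2 * (s - zm) ^ 2 <= G th beta s - G th beta zm.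
Proof.
  destruct (min_crit_spec th beta zm Hth Hbeta Hzm) as [HdF Hz].
  pose proof (u_minus_bounds th ltac:(lra)).
  exists (Rpower (1 - zm ^ 2) (th - 2) * ((2 * th - 1) * mid ^ 2 - 1)).
  assert (Hmid : 0 < (2 * th - 1) * mid ^ 2 - 1)
    by (pose proof (d2F_pos th mid Hth ltac:(unfold mid; lra)) as Hd; unfold d2F in Hd;
        pose proof (Rpower_gt_0 (1 - mid ^ 2) (th - 2)); nra).
  split; [apply Rmult_lt_0_compat; [apply Rpower_gt_0| exact Hmid]|].
  apply (quadratic_growth (G th beta) (fun u => dF th u - beta) (d2F th));
    [unfold mid; lra| | | | | |lra].
  - intros u _. apply is_derive_G, Hth.
  - intros u _. apply G_continuous, Hth.
  - intros u Hu. replace (d2F th u) with (d2F th u - 0) by ring.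
    apply is_derive_Reals, (derivable_pt_lim_minus (dF th) (fun _ => beta));
      [apply is_derive_Reals, is_derive_dF; unfold mid in *; lra| apply derivable_pt_lim_const].
  - intros u _. apply dG_continuous, Hth.
  - intros u Hu. assert (Hmid0 : zm < mid < 0) by (unfold mid; lra).
    unfold d2F. apply Rmult_le_compat.
    + left; apply Rpower_gt_0.
    + lra.
    + apply Rle_Rpower_l; [lra| split; nra].
    + assert (mid ^ 2 <= u ^ 2) by nra. nra.
Qed.

Lemma G_first_return : exists zp, mid < zp <= 1 /\ G th beta zp = G th beta zm /\
  forall u, zm < u < zp -> G th beta zm < G th beta u.
Proof.
  destruct (min_crit_spec th beta zm Hth Hbeta Hzm) as [HdF Hz].
  pose proof (u_minus_bounds th ltac:(lra)).
  destruct G_quadratic_growth as [c [Hc Hquad]].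
  assert (Hgrow : forall u, zm < u <= mid -> G th beta zm < G th beta u).
  { intros u Hu. specialize (Hquad u ltac:(lra)).
    assert (0 < c / 2 * (u - zm) ^ 2) by (apply Rmult_lt_0_compat; [lra| apply pow_lt; lra]). lra. }
  destruct (first_zero (fun u => G th beta u - G th beta zm) mid 1) as [zp [Hzp [Hlevel Hbefore]]].
  - unfold mid. lra.
  - intros x _. apply continuity_pt_minus; [apply G_continuous, Hth|].
    apply continuity_pt_const. now intros ? ?.
  - specialize (Hgrow mid ltac:(unfold mid; lra)). lra.
  - unfold G. rewrite F_1. pose proof (F_ge_0 th zm ltac:(lra)). nra.
  - exists zp. split; [exact Hzp| split; [lra|]]. intros u Hu.
    destruct (Rle_dec u mid); [apply Hgrow; lra|]. specialize (Hbefore u ltac:(lra)). lra.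
Qed.

Lemma dG_neg_at_return zp : mid < zp <= 1 -> G th beta zp = G th beta zm ->
  dF th zp - beta < 0.
Proof.
  intros Hzp Hlevel.
  destruct (min_crit_spec th beta zm Hth Hbeta Hzm) as [HdF Hz].
  destruct (Rle_dec 0 zp) as [Hpos|Hneg]; [pose proof (dF_le_0_right th zp ltac:(lra)); lra|].
  apply Rnot_le_lt. intros Hge.
  (* otherwise [G] would increase strictly on [zm, zp] *)
  enough (G th beta zm < G th beta zp) by lra.
  apply (lt_of_derive_pos (G th beta) (fun u => dF th u - beta)); [unfold mid in Hzp; lra| | |].
  - intros x _. apply is_derive_G, Hth.
  - intros x _. apply G_continuous, Hth.
  - intros x Hx. destruct (Rle_dec x (u_minus th)).
    + pose proof (dF_incr th zm x Hth ltac:(lra) ltac:(lra) ltac:(lra)). lra.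
    + pose proof (dF_decr th x zp Hth ltac:(lra) ltac:(lra) ltac:(lra)). lra.
Qed.

Lemma pulse_up_exists : 2 < p -> 0 < eps -> exists psi, pulse_up th p eps beta zm psi.
Proof.
  intros Hp Heps.
  destruct (min_crit_spec th beta zm Hth Hbeta Hzm) as [HdF Hz].
  destruct G_first_return as [zp [Hzp [Hlevel Hwell]]].
  destruct (compact_pulse_exists (G th beta) (fun u => dF th u - beta) zm zp (Rpower eps p) p)
    as [psi [om [Hom [Hex [Hflux [H0 [Hmax [Hout [Hinc Hdec]]]]]]]]].
  - intros u. apply is_derive_G, Hth.
  - intros u. apply dG_continuous, Hth.
  - unfold mid in Hzp. lra.
  - exact Hlevel.
  - exact Hwell.
  - lra.
  - apply dG_neg_at_return; assumption.
  - destruct G_quadratic_growth as [c [Hc Hquad]].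
    exists (c / 2), (mid - zm). split; [lra| split; [unfold mid; lra|]].
    intros s Hs. apply Hquad. lra.
  - apply Rpower_gt_0.
  - exact Hp.
  - exists psi. split; [apply is_solution_of_flux; assumption|].
    split; [exact Hmax|]. split; [rewrite H0; exact Hlevel|].
    exists om. split; [exact Hom|]. split; [|split; assumption].
    intros x Hx. apply Hout. split_Rabs; lra.
Qed.

End PulseUp.

Lemma filterlim_at_right_0 (f : R -> R) (l : R) :
  (forall eps, 0 < eps -> exists d, 0 < d /\ forall b, 0 < b < d -> Rabs (f b - l) < eps) ->
  filterlim f (at_right 0) (locally l).
Proof.
  intros H. apply filterlim_locally. intros eps.
  destruct (H eps (cond_pos eps)) as [d [Hd Hb]].
  exists (mkposreal d Hd). intros y Hy Hy0. apply Hb.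
  unfold ball in Hy; simpl in Hy; unfold AbsRing_ball, abs, minus, plus, opp in Hy; simpl in Hy.
  rewrite Ropp_0, Rplus_0_r in Hy. split_Rabs; lra.
Qed.

Lemma min_crit_near_m1 th : 2 < th -> forall eta, 0 < eta -> exists d, 0 < d /\
  forall beta z, 0 < beta < d -> beta < dF th (u_minus th) -> is_min_crit th beta z ->
    Rabs (z + 1) < eta.
Proof.
  intros Hth eta Heta. pose proof (u_minus_bounds th ltac:(lra)).
  set (x0 := -1 + Rmin (eta / 2) ((1 + u_minus th) / 2)).
  assert (Hx0 : -1 < x0 < u_minus th /\ x0 < -1 + eta).
  { pose proof (Rmin_l (eta / 2) ((1 + u_minus th) / 2)).
    pose proof (Rmin_r (eta / 2) ((1 + u_minus th) / 2)).
    assert (0 < Rmin (eta / 2) ((1 + u_minus th) / 2)) by (apply Rmin_pos; lra).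
    unfold x0. lra. }
  exists (dF th x0). split; [rewrite <- (dF_m1 th); apply dF_incr; lra|].
  intros beta z Hb Hb' Hmc.
  destruct (min_crit_spec th beta z Hth (conj (proj1 Hb) Hb') Hmc) as [HdF Hz].
  destruct (Rlt_dec z x0); [split_Rabs; lra|].
  destruct (Req_dec z x0) as [->|]; [lra|].
  pose proof (dF_incr th x0 z Hth ltac:(lra) ltac:(lra) ltac:(lra)). lra.
Qed.

Lemma F_small_near_one th : 1 < th -> forall e, 0 < e -> exists mu, 0 < mu /\
  forall y, u_minus th < y -> F th y < mu -> Rabs (y - 1) < e.
Proof.
  intros Hth e He. pose proof (u_minus_bounds th Hth).
  set (kap := e * (1 + u_minus th)).
  assert (Hkap : 0 < kap) by (apply Rmult_lt_0_compat; lra).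
  exists (/ (2 * th) * Rpower kap th).
  split; [apply Rmult_lt_0_compat; [apply Rinv_0_lt_compat; lra| apply Rpower_gt_0]|].
  intros y Hy HF.
  assert (Hsmall : Rabs (1 - y ^ 2) < kap).
  { apply Rnot_le_lt. intros Hle. apply (Rlt_not_le _ _ HF).
    unfold F. apply Rmult_le_compat_l; [left; apply Rinv_0_lt_compat; lra|].
    rewrite rpow_Rpower by lra. apply Rle_Rpower_l; lra. }
  replace (1 - y ^ 2) with ((1 - y) * (1 + y)) in Hsmall by ring.
  rewrite Rabs_mult, (Rabs_right (1 + y)) in Hsmall by lra.
  rewrite Rabs_minus_sym. apply (Rmult_lt_reg_r (1 + u_minus th)); [lra|].
  apply Rle_lt_trans with (Rabs (1 - y) * (1 + y)); [apply Rmult_le_compat_l; [apply Rabs_pos| lra]|].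
  exact Hsmall.
Qed.

Lemma F_le_inside th z : 1 < th -> -1 <= z <= 1 -> F th z <= / (2 * th).
Proof.
  intros Hth Hz. unfold F. rewrite <- (Rmult_1_r (/ (2 * th))) at 2.
  apply Rmult_le_compat_l; [left; apply Rinv_0_lt_compat; lra|].
  rewrite Rabs_right by nra. destruct (Rlt_dec 0 (1 - z ^ 2)); [|rewrite rpow_nonpos; lra].
  rewrite rpow_Rpower by lra.
  replace 1 with (Rpower 1 th) at 2 by (unfold Rpower; rewrite ln_1, Rmult_0_r; apply exp_0).
  apply Rle_Rpower_l; [lra| split; nra].
Qed.

Lemma F_ge_outside th y : 1 < th -> 2 <= y ^ 2 -> / (2 * th) * (y ^ 2 - 1) <= F th y.
Proof.
  intros Hth Hy. unfold F. apply Rmult_le_compat_l; [left; apply Rinv_0_lt_compat; lra|].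
  rewrite Rabs_left, rpow_Rpower by nra. replace (- (1 - y ^ 2)) with (y ^ 2 - 1) by ring.
  rewrite <- (Rpower_1 (y ^ 2 - 1)) at 1 by lra.
  apply Rle_Rpower; lra.
Qed.

Lemma level_point_lt_2 th beta z y : 1 < th -> 0 < beta < / (4 * th) -> -1 <= z <= 1 ->
  z < y -> G th beta y = G th beta z -> y < 2.
Proof.
  intros Hth Hb Hz Hzy HG. apply Rnot_le_lt. intros Hy. unfold G in HG.
  pose proof (F_le_inside th z Hth Hz). pose proof (F_ge_outside th y Hth ltac:(nra)).
  set (it := / (2 * th)) in *.
  assert (Hit : 0 < it) by (apply Rinv_0_lt_compat; lra).
  assert (Hb' : beta < it / 2)
    by (unfold it; replace (/ (2 * th) / 2) with (/ (4 * th)) by (field; lra); lra).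
  assert (beta * (y - z) <= it / 2 * (y + 1)) by nra.
  assert (0 < it * (y ^ 2 - 2 - (y + 1) / 2)) by (apply Rmult_lt_0_compat; nra).
  lra.
Qed.

Lemma level_point_gt_u_minus th beta z y : 2 < th -> 0 < beta < dF th (u_minus th) ->
  is_min_crit th beta z -> z < y -> G th beta y = G th beta z -> u_minus th < y.
Proof.
  intros Hth Hb Hmc Hzy HG. destruct (min_crit_spec th beta z Hth Hb Hmc) as [HdF Hz].
  apply Rnot_le_lt. intros Hy.
  enough (G th beta z < G th beta y) by lra.
  apply (lt_of_derive_pos (G th beta) (fun u => dF th u - beta)); [exact Hzy| | |].
  - intros x _. apply is_derive_G, Hth.
  - intros x _. apply G_continuous, Hth.
  - intros x Hx. pose proof (dF_incr th z x Hth ltac:(lra) ltac:(lra) ltac:(lra)). lra.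
Qed.

Lemma pulse_up_top_gt th p eps beta zm psi : pulse_up th p eps beta zm psi -> zm < psi 0.
Proof.
  intros [[Hex _] [_ [_ [om [Hom [Hout [Hinc _]]]]]]].
  rewrite <- (Hout (- om)) by lra.
  apply (lt_of_derive_pos psi (Derive psi)); [lra| | |].
  - intros x _. apply Derive_correct, Hex.
  - intros x _. exact (is_derive_continuity_pt _ _ _ (Derive_correct _ _ (Hex x))).
  - intros x Hx. apply Hinc. lra.
Qed.

Lemma min_crit_tends_to_m1 th (zm : R -> R) : 2 < th ->
  (forall beta, 0 < beta < dF th (u_minus th) -> is_min_crit th beta (zm beta)) ->
  filterlim zm (at_right 0) (locally (-1)).
Proof.
  intros Hth Hmc. pose proof (dF_u_minus_pos th Hth).
  apply filterlim_at_right_0. intros e He.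
  destruct (min_crit_near_m1 th Hth e He) as [d [Hd Hnear]].
  exists (Rmin d (dF th (u_minus th))). split; [apply Rmin_pos; lra|].
  intros b Hb. pose proof (Rmin_l d (dF th (u_minus th))). pose proof (Rmin_r d (dF th (u_minus th))).
  replace (zm b - -1) with (zm b + 1) by ring. apply (Hnear b); [lra| lra| apply Hmc; lra].
Qed.

Lemma pulse_top_tends_to_1 th p eps (zm : R -> R) (Psi : R -> R -> R) : 2 < th ->
  (forall beta, 0 < beta < dF th (u_minus th) ->
     is_min_crit th beta (zm beta) /\ pulse_up th p eps beta (zm beta) (Psi beta)) ->
  filterlim (fun beta => Psi beta 0) (at_right 0) (locally 1).
Proof.
  intros Hth Hall. pose proof (dF_u_minus_pos th Hth). pose proof (u_minus_bounds th ltac:(lra)).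
  apply filterlim_at_right_0. intros e He.
  destruct (F_small_near_one th ltac:(lra) e He) as [mu [Hmu Hnear1]].
  destruct (continuity_pt_ball (F th) (-1)
              (is_derive_continuity_pt _ _ _ (is_derive_F th (-1) Hth)) (mu / 2)) as [eta [Heta HF]];
    [lra|].
  destruct (min_crit_near_m1 th Hth eta Heta) as [d [Hd Hnear]].
  assert (H4 : 0 < / (4 * th)) by (apply Rinv_0_lt_compat; lra).
  set (d' := Rmin (Rmin d (dF th (u_minus th))) (Rmin (/ (4 * th)) (mu / 6))).
  assert (Hd1 : d' <= d) by (eapply Rle_trans; [apply Rmin_l| apply Rmin_l]).
  assert (Hd2 : d' <= dF th (u_minus th)) by (eapply Rle_trans; [apply Rmin_l| apply Rmin_r]).
  assert (Hd3 : d' <= / (4 * th)) by (eapply Rle_trans; [apply Rmin_r| apply Rmin_l]).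
  assert (Hd4 : d' <= mu / 6) by (eapply Rle_trans; [apply Rmin_r| apply Rmin_r]).
  exists d'. split; [unfold d'; repeat apply Rmin_pos; lra|]. intros b Hb.
  destruct (Hall b ltac:(lra)) as [Hmc Hpulse].
  destruct (min_crit_spec th b (zm b) Hth ltac:(lra) Hmc) as [_ Hz].
  pose proof (pulse_up_top_gt _ _ _ _ _ _ Hpulse) as Hzy.
  destruct Hpulse as [_ [_ [HG _]]].
  pose proof (level_point_gt_u_minus th b (zm b) (Psi b 0) Hth ltac:(lra) Hmc Hzy HG).
  pose proof (level_point_lt_2 th b (zm b) (Psi b 0) ltac:(lra) ltac:(lra) ltac:(lra) Hzy HG).
  assert (HFz : F th (zm b) < mu / 2).
  { assert (Hclose : Rabs (zm b - -1) < eta)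
      by (replace (zm b - -1) with (zm b + 1) by ring; apply (Hnear b); [lra| lra| exact Hmc]).
    specialize (HF (zm b) Hclose). rewrite F_m1 in HF. split_Rabs; lra. }
  apply Hnear1; [lra|]. unfold G in HG.
  assert (b * (Psi b 0 - zm b) <= mu / 6 * 3) by (apply Rmult_le_compat; lra).
  lra.
Qed.

Lemma phi_p_opp p s : phi_p p (- s) = - phi_p p s.
Proof. unfold phi_p. rewrite Rabs_Ropp. ring. Qed.

Lemma max_crit_opp th beta zp : 2 < th ->
  is_max_crit th beta zp -> is_min_crit th (- beta) (- zp).
Proof.
  intros Hth [Hc Hmax]. rewrite Derive_G in Hc by exact Hth.
  split; [rewrite Derive_G, dF_opp by exact Hth; lra|].
  intros w Hw. rewrite Derive_G in Hw by exact Hth.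
  enough (- w <= zp) by lra.
  apply Hmax. rewrite Derive_G, dF_opp by exact Hth. lra.
Qed.

Lemma pulse_down_of_pulse_up th p eps beta zp psi : 2 < th ->
  pulse_up th p eps (- beta) (- zp) psi -> pulse_down th p eps beta zp (fun x => - psi x).
Proof.
  intros Hth [[Hex Hsol] [Hmax [HG [om [Hom [Hout [Hinc Hdec]]]]]]].
  assert (HD : forall y, Derive (fun x => - psi x) y = - Derive psi y) by (intros; apply Derive_opp).
  assert (Hflux : forall y, phi_p p (Derive (fun x => - psi x) y) = - phi_p p (Derive psi y))
    by (intros; rewrite HD; apply phi_p_opp).
  split; [split|split; [|split]].
  - intros x. apply (ex_derive_opp psi), Hex.
  - intros x. destruct (Hsol x) as [Hexf Heq]. split.
    + eapply ex_derive_ext; [intros y; symmetry; apply Hflux|].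
      apply (ex_derive_opp (fun y => phi_p p (Derive psi y))), Hexf.
    + rewrite (Derive_ext _ _ x Hflux), Derive_opp, Derive_G by exact Hth.
      rewrite Derive_G in Heq by exact Hth. rewrite dF_opp. lra.
  - intros x. specialize (Hmax x). lra.
  - unfold G in *. rewrite F_opp, <- (F_opp th zp). lra.
  - exists om. split; [exact Hom|]. split; [|split].
    + intros x Hx. rewrite Hout by exact Hx. ring.
    + intros x Hx. rewrite HD. specialize (Hinc x Hx). lra.
    + intros x Hx. rewrite HD. specialize (Hdec x Hx). lra.
Qed.

Theorem proposition2p2 (th p eps : R) :
  1 < th -> 1 < p -> 0 < eps -> 2 < p <= th ->
  (* (i) *)
  ((forall beta zm : R,
      0 < beta < Derive (F th) (u_minus th) ->
      is_min_crit th beta zm ->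
      exists psi : R -> R, pulse_up th p eps beta zm psi) /\
   (* limits z_beta^- -> -1 and z_beta^+ = psi_beta(0) -> 1 as beta -> 0+,
      for any choice of the pulses psi_beta *)
   (forall (zm : R -> R) (Psi : R -> R -> R),
      (forall beta, 0 < beta < Derive (F th) (u_minus th) ->
         is_min_crit th beta (zm beta) /\
         pulse_up th p eps beta (zm beta) (Psi beta)) ->
      filterlim zm (at_right 0) (locally (-1)) /\
      filterlim (fun beta => Psi beta 0) (at_right 0) (locally 1))) /\
  (* (ii) *)
  (forall beta zp : R,
      Derive (F th) (u_plus th) < beta < 0 ->
      is_max_crit th beta zp ->
      exists psi : R -> R, pulse_down th p eps beta zp psi).
Proof.
  intros _ _ Heps [Hp Hpth].
  assert (Hth : 2 < th) by lra.
  rewrite !Derive_F by exact Hth.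
  split; [split|].
  - intros beta zm Hb Hmc. exact (pulse_up_exists th p eps beta zm Hth Hb Hmc Hp Heps).
  - intros zm Psi Hall. split.
    + apply (min_crit_tends_to_m1 th zm Hth). intros beta Hb. apply Hall, Hb.
    + exact (pulse_top_tends_to_1 th p eps zm Psi Hth Hall).
  - intros beta zp Hb Hmc. rewrite u_plus_opp, dF_opp in Hb.
    destruct (pulse_up_exists th p eps (- beta) (- zp) Hth ltac:(lra)
                (max_crit_opp th beta zp Hth Hmc) Hp Heps) as [psi Hpsi].
    exists (fun x => - psi x). exact (pulse_down_of_pulse_up th p eps beta zp psi Hth Hpsi).
Qed.
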